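(* Let $R$ be a Dedekind domain and let $A$ be a torsion-free $R$-module of finite rank. The following are equivalent: (a) $A$ is a self-pure-generator; (b) every pure submodule of $A$ of rank $1$ is $A$-generated; (c) $A$ has a quasi-direct summand $B$ of rank $1$ such that $\mathbf{type}(B)=\mathbf{IT}(A)$; (d) $A$ has a direct summand $B$ of rank $1$ such that $\mathbf{type}(B)=\mathbf{IT}(A)$.
   Context: $R$ is a Dedekind domain with quotient field $\mathbf{Q}$. A torsion-free $R$-module has rank $n$ if it embeds as an essential submodule of $\mathbf{Q}^n$. For a module $A$, a submodule $K$ is $A$-generated if there is an epimorphism $A^{(I)}\to K$ for some set $I$. $A$ is a self-pure-generator if every pure submodule of $A$ is $A$-generated. For $X\subseteq A$, $\langle X\rangle_\star$ denotes the pure submodule of $A$ generated by $X$. Two submodules $A,C$ of a $\mathbf{Q}$-vector space are quasi-equal if $\mathbf{Q}A=\mathbf{Q}C$ and $rC\le A$, $sA\le C$ for some nonzero $r,s\in R$. A quasi-homomorphism $A\to B$ is an element of $\mathbf{Q}\otimes_R\operatorname{Hom}(A,B)$; a quasi-isomorphism is an isomorphism in the category of finite rank torsion-free modules with these morphisms (equivalently, an injective homomorphism $f:A\to B$ with $f(A)$ quasi-equal to $B$, up to rescaling). $B$ is a quasi-direct summand of $A$ if there is a submodule $B'\oplus C\le A$ quasi-equal to $A$ with $B'$ quasi-isomorphic to $B$. The type $\mathbf{type}(B)$ of a rank $1$ torsion-free module $B$ is its quasi-isomorphism class; types are partially ordered by $\mathbf{type}(B)\le\mathbf{type}(C)$ iff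 there is a monomorphism $B\to C$, and form a lattice (for $B,C\le\mathbf{Q}$: $\inf=\mathbf{type}(B\cap C)$). For $0\ne a\in A$, $\mathbf{type}(a)=\mathbf{type}(\langle a\rangle_\star)$. The inner type $\mathbf{IT}(A)=\inf\{\mathbf{type}(x_1),\dots,\mathbf{type}(x_n)\}$ for a maximal independent system $x_1,\dots,x_n$ of $A$; it is independent of the choice and equals the greatest lower bound of the types of all nonzero elements of $A$. *)

From HB Require Import structures.
From mathcomp Require Import all_boot all_order all_algebra.
From mathcomp Require Import fraction.
From Stdlib Require List.
Set Implicit Arguments. Unset Strict Implicit. Unset Printing Implicit Defensive.
Import GRing.Theory.
Local Open Scope ring_scope.

(* Every torsion-free R-module of finite rank is (up to isomorphism) an
   R-submodule of Q^n = 'rV[{fraction R}]_n; all modules below are such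
   submodules, represented as Prop-valued subsets of 'rV_n. *)

Section Defs.
Variable R : idomainType.
Local Notation Q := {fraction R}.
Local Notation "x %:F" := (@tofrac R x).

Definition is_ideal (I : R -> Prop) :=
  I 0 /\ (forall x y, I x -> I y -> I (x + y)) /\ (forall r x, I x -> I (r * x)).
Definition fin_gen_ideal (I : R -> Prop) :=
  exists s : seq R, forall x,
    I x <-> exists c : 'I_(size s) -> R, x = \sum_(i < size s) c i * s`_i.
Definition noetherian_dom := forall I, is_ideal I -> fin_gen_ideal I.
Definition prime_ideal (I : R -> Prop) :=
  is_ideal I /\ ~ I 1 /\ (forall a b, I (a * b) -> I a \/ I b).
Definition maximal_ideal (I : R -> Prop) :=
  is_ideal I /\ ~ I 1 /\
  (forall J, is_ideal J -> (forall x, I x -> J x) -> (forall x, J x -> I x) \/ J 1).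
Definition integrally_closed_dom :=
  forall (x : Q) (p : {poly R}), p \is monic -> root (map_poly (@tofrac R) p) x ->
    exists r : R, x = r%:F.
Definition dedekind :=
  [/\ noetherian_dom, integrally_closed_dom &
      forall P, prime_ideal P -> (exists x, P x /\ x != 0) -> maximal_ideal P].

Definition vset (n : nat) := 'rV[Q]_n -> Prop.
Definition smul n (r : R) (v : 'rV[Q]_n) := r%:F *: v.

Definition submod n (A : vset n) :=
  A 0 /\ (forall x y, A x -> A y -> A (x + y)) /\ (forall r x, A x -> A (smul r x)).
Definition vsubset n (B A : vset n) := forall x, B x -> A x.
Definition submodule_of n (B A : vset n) := submod B /\ vsubset B A.

(* pure submodule: rA \cap B = rB for all r in R *)
Definition pure_in n (B A : vset n) :=
  submodule_of B A /\
  forall (r : R) a, A a -> B (smul r a) -> exists b, B b /\ smul r a = smul r b.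

Definition pure_hull n (A X : vset n) : vset n :=
  fun x => forall P, pure_in P A -> vsubset X P -> P x.
Definition elem_hull n (A : vset n) (a : 'rV[Q]_n) : vset n :=
  pure_hull A (fun x => x = a).

(* R-homomorphisms B -> C (only the values on B matter) *)
Definition hom n m (B : vset n) (C : vset m) (f : 'rV[Q]_n -> 'rV[Q]_m) :=
  [/\ forall x y, B x -> B y -> f (x + y) = f x + f y,
      forall r x, B x -> f (smul r x) = smul r (f x) &
      forall x, B x -> C (f x)].
Definition mono n m (B : vset n) (C : vset m) f :=
  hom B C f /\ forall x y, B x -> B y -> f x = f y -> x = y.

(* K is A-generated: an epimorphism A^(I) -> K, i.e. a family (f_i)_{i in I}
   of homomorphisms A -> K such that the induced map from the direct sum
   A^(I) is onto K. *)
Definition generated_by n m (A : vset n) (C : vset m) :=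
  exists (I : Type) (f : I -> 'rV[Q]_n -> 'rV[Q]_m),
    (forall i, hom A C (f i)) /\
    forall y, C y -> exists s : seq (I * 'rV[Q]_n),
      List.Forall (fun p => A p.2) s /\ y = \sum_(p <- s) f p.1 p.2.

Definition self_pure_generator n (A : vset n) :=
  forall P, pure_in P A -> generated_by A P.

Definition rank1 n (B : vset n) :=
  submod B /\ exists b0, [/\ B b0, b0 != 0 &
     forall b, B b -> exists c : Q, b = c *: b0].

(* type(B) <= type(C) iff there is a monomorphism B -> C *)
Definition type_le n m (B : vset n) (C : vset m) := exists f, mono B C f.

(* type(B) = IT(A): type(B) is the greatest lower bound of the types
   type(a) = type(<a>_* ) of the nonzero elements a of A *)
Definition type_is_IT n m (A : vset n) (B : vset m) :=
  [/\ rank1 B,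
      forall a, A a -> a != 0 -> type_le B (elem_hull A a) &
      forall m' (C : vset m'), rank1 C ->
        (forall a, A a -> a != 0 -> type_le C (elem_hull A a)) -> type_le C B].

Definition qspan n (A : vset n) : vset n :=
  fun x => exists (c : Q) a, A a /\ x = c *: a.
Definition quasi_equal n (A C : vset n) :=
  (forall x, qspan A x <-> qspan C x) /\
  exists r s : R, [/\ r != 0, s != 0,
     (forall c, C c -> A (smul r c)) & (forall a, A a -> C (smul s a))].
(* isomorphism in the category with morphisms Q \otimes Hom *)
Definition quasi_iso n m (B : vset n) (C : vset m) :=
  exists f g (r s : R), [/\ hom B C f, hom C B g, r != 0 & s != 0] /\
     (forall x, B x -> g (f x) = smul r x) /\ (forall y, C y -> f (g y) = smul s y).

Definition sum_set n (B C : vset n) : vset n :=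
  fun x => exists b c, [/\ B b, C c & x = b + c].
Definition indep n (B C : vset n) := forall x, B x -> C x -> x = 0.

Definition quasi_summand n m (A : vset n) (B : vset m) :=
  exists B' C : vset n, [/\ submodule_of B' A, submodule_of C A, indep B' C,
     quasi_equal (sum_set B' C) A & quasi_iso B' B].

Definition direct_summand n (A B : vset n) :=
  submodule_of B A /\ exists C, [/\ submodule_of C A, indep B C &
     forall a, A a <-> sum_set B C a].

End Defs.

(* A quasi-summand B of type IT(A) yields an element b of A of type IT(A) and an R-linear
   form phi on A with phi(A) b inside A and phi(b) <> 0.  Over a Dedekind domain the
   rank-one module phi(A) is invertible in a suitable sense, which is checked locally,
   R_P being a discrete valuation ring at each maximal ideal P.  This gives
   1 = sum t_i phi(a_i) with t_i phi(A) inside a prescribed module whose type is at least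
   that of phi(A).  With the module {t | t y in A} the maps x |-> t_i phi(x) y generate any
   pure submodule containing y, so (c) implies (a); with the modules phi(a) {t | t a in A}
   one gets w with phi(phi(x) w) = phi(x), so A = <w>_* (+) ker phi and (c) implies (d).
   Conversely, by (b) the maps of A onto the pure hulls of a basis can be taken nonzero;
   an element at which none of them vanishes (found along z + u^i y for a non-unit u,
   unless R is a field) has type IT(A), and a map of A onto the pure hull of such an
   element, nonzero at another such element y, splits off <y>_* up to quasi-equality. *)

From HB Require Import structures.
From mathcomp Require Import all_boot all_order all_algebra.
From mathcomp Require Import fraction ring.
From Stdlib Require Import Classical ClassicalEpsilon FunctionalExtensionality PropExtensionality.
From Stdlib Require List.
Set Implicit Arguments. Unset Strict Implicit. Unset Printing Implicit Defensive.
Import GRing.Theory.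
Local Open Scope ring_scope.

Lemma In_map_inv (A B : Type) (f : A -> B) (l : seq A) y :
  List.In y (map f l) -> exists x, List.In x l /\ y = f x.
Proof.
elim: l => [|a l IH] //= [<-|/IH [x [h1 h2]]]; first by exists a; split => //; left.
by exists x; split => //; right.
Qed.

Lemma In_map (A B : Type) (f : A -> B) (l : seq A) x :
  List.In x l -> List.In (f x) (map f l).
Proof. by elim: l => //= y l IH [->|/IH]; [left | right]. Qed.

Lemma InP (T : eqType) (x : T) (s : seq T) : reflect (List.In x s) (x \in s).
Proof.
elim: s => [|y s IH] /=; first by right.
rewrite inE; apply: (iffP orP) => [[/eqP ->|/IH]|[->|/IH]]; by [left | right | rewrite eqxx; left].
Qed.

Section IdealTheory.
Variable R : idomainType.
Local Notation K := {fraction R}.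
Local Notation "x %:F" := (@tofrac R x).

Lemma tofrac_quot (x : K) : exists a b : R, b != 0 /\ x = a%:F / b%:F.
Proof.
elim/quotW: x => r.
exists r.1, r.2; split; first exact: denom_ratioP.
unlock tofrac.
rewrite -[X in _ = _ * X]/(FracField.inv _) -FracField.pi_inv.
rewrite -[X in _ = X]/(FracField.mul _ _) -FracField.pi_mul.
apply/eqmodP; rewrite /= FracField.equivfE /FracField.invf /FracField.mulf /=.
rewrite !numden_Ratio ?oner_neq0 ?denom_ratioP ?mul1r ?mulr1 1?mulrC //.
all: exact: denom_ratioP.
Qed.

Definition sub_ideal (I J : R -> Prop) := forall x, I x -> J x.

Lemma ideal0 (I : R -> Prop) : is_ideal I -> I 0. Proof. by case. Qed.
Lemma idealD (I : R -> Prop) x y : is_ideal I -> I x -> I y -> I (x + y).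
Proof. by case=> _ [H _]; apply: H. Qed.
Lemma idealM (I : R -> Prop) r x : is_ideal I -> I x -> I (r * x).
Proof. by case=> _ [_ H]; apply: H. Qed.
Lemma idealMr (I : R -> Prop) r x : is_ideal I -> I x -> I (x * r).
Proof. by move=> II Ix; rewrite mulrC; apply: idealM. Qed.

Lemma ideal_sum (I : R -> Prop) (m : nat) (F : 'I_m -> R) : is_ideal I ->
  (forall i, I (F i)) -> I (\sum_(i < m) F i).
Proof. by move=> II HF; apply: (big_ind I (ideal0 II)) => // x y; apply: idealD. Qed.

Lemma ideal_nonzero_of_notin (I : R -> Prop) s : is_ideal I -> ~ I s -> s != 0.
Proof. by move=> II ns; apply/eqP => s0; apply: ns; rewrite s0; apply: ideal0. Qed.

Lemma ideal_generator (I : R -> Prop) (s : seq R) :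
  (forall x, I x <-> exists c : 'I_(size s) -> R, x = \sum_(i < size s) c i * s`_i) ->
  forall i, (i < size s)%N -> I s`_i.
Proof.
move=> Hs i lti; apply/Hs; exists (fun j : 'I_(size s) => (j == Ordinal lti)%:R).
rewrite (bigD1 (Ordinal lti)) //= eqxx mul1r big1 ?addr0 // => j /negbTE ->.
by rewrite mul0r.
Qed.

Lemma noetherian_chain_stationary (hN : noetherian_dom R) (I : nat -> R -> Prop) :
  (forall k, is_ideal (I k)) -> (forall k, sub_ideal (I k) (I k.+1)) ->
  exists k0, forall k, sub_ideal (I k) (I k0).
Proof.
move=> Iid Imono.
have mono : {homo I : k k' / (k <= k')%N >-> sub_ideal k k'}.
  by apply: homo_leq => [J x //|J1 J2 J3 h12 h23 x /h12 /h23|].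
pose U x := exists k, I k x.
have Uid : is_ideal U.
  split; first by exists 0%N; apply: ideal0.
  split; last by move=> r x [k h]; exists k; apply: idealM.
  move=> x y [k1 h1] [k2 h2]; exists (maxn k1 k2).
  by apply: idealD => //; [apply: (mono k1) h1; rewrite leq_maxl
                          | apply: (mono k2) h2; rewrite leq_maxr].
have [s Hs] := hN U Uid.
have [k Hk] := fin_all_exists (fun i : 'I_(size s) => ideal_generator Hs (ltn_ord i)).
exists (\max_i k i) => k' x Ix.
have [c ->] := (Hs x).1 (ex_intro _ k' Ix).
apply: ideal_sum => // i; apply: idealM => //.
exact: mono (leq_bigmax i) _ (Hk i).
Qed.

Lemma noetherian_maximal (hN : noetherian_dom R) (F : (R -> Prop) -> Prop) :
  (forall I, F I -> is_ideal I) -> (exists I, F I) ->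
  exists M, F M /\ forall I, F I -> sub_ideal M I -> sub_ideal I M.
Proof.
move=> Fid [I0 FI0]; apply: NNPP => Hno.
have step : forall M : {I | F I}, {J : {I | F I} |
    sub_ideal (sval M) (sval J) /\ ~ sub_ideal (sval J) (sval M)}.
  move=> [M FM]; apply: constructive_indefinite_description.
  apply: NNPP => H; apply: Hno; exists M; split => // I FI MI.
  by apply: NNPP => nIM; apply: H; exists (exist _ I FI).
pose f := fix f k := if k is k.+1 then sval (step (f k)) else exist _ I0 FI0.
have [k0 Hk0] := noetherian_chain_stationary hN (I := fun k => sval (f k))
  (fun k => Fid _ (svalP (f k))) (fun k => (svalP (step (f k))).1).
exact: (svalP (step (f k0))).2 (Hk0 k0.+1).
Qed.

Lemma maximal_ideal_over (hN : noetherian_dom R) (I : R -> Prop) :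
  is_ideal I -> ~ I 1 -> exists P, maximal_ideal P /\ sub_ideal I P.
Proof.
move=> II nI1.
have [M [[MI [nM1 IM]] Mmax]] := noetherian_maximal hN
  (F := fun J => is_ideal J /\ ~ J 1 /\ sub_ideal I J) (fun J h => h.1)
  (ex_intro _ I (conj II (conj nI1 (fun x h => h)))).
exists M; split => //; split => //; split => // J JI MJ.
case: (classic (J 1)) => [|nJ1]; [by right | left].
by apply: Mmax => //; split => //; split => // x /IM; apply: MJ.
Qed.

Definition ideal_adjoin (I : R -> Prop) a := fun x => exists m r, I m /\ x = m + r * a.

Lemma ideal_adjoin_ideal (I : R -> Prop) a : is_ideal I -> is_ideal (ideal_adjoin I a).
Proof.
move=> II; split; first by exists 0, 0; rewrite mul0r addr0; split => //; apply: ideal0.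
split.
- move=> x y [m [r [Im ->]]] [m' [r' [Im' ->]]]; exists (m + m'), (r + r').
  by split; [apply: idealD | rewrite mulrDl addrACA].
- move=> s x [m [r [Im ->]]]; exists (s * m), (s * r).
  by split; [apply: idealM | rewrite mulrDr mulrA].
Qed.

Lemma sub_ideal_adjoin (I : R -> Prop) a : is_ideal I -> sub_ideal I (ideal_adjoin I a).
Proof. by move=> II x Ix; exists x, 0; rewrite mul0r addr0. Qed.

Lemma ideal_adjoin_mem (I : R -> Prop) a : is_ideal I -> ideal_adjoin I a a.
Proof. by move=> II; exists 0, 1; rewrite mul1r add0r; split => //; apply: ideal0. Qed.

Lemma maximal_ideal_prime (P : R -> Prop) : maximal_ideal P -> prime_ideal P.
Proof.
move=> [PI [nP1 Pmax]]; split => //; split => // a b Pab.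
case: (classic (P a)) => [|nPa]; [by left | right].
case: (Pmax _ (ideal_adjoin_ideal a PI) (sub_ideal_adjoin a PI)) => [J1|].
  by case: nPa; apply: J1; apply: ideal_adjoin_mem.
case=> m [r [Pm e]].
have -> : b = m * b + r * (a * b) by rewrite mulrA -mulrDl -e mul1r.
by apply: idealD => //; [apply: idealMr | apply: idealM].
Qed.

Lemma prime_notin_mul (P : R -> Prop) a b : prime_ideal P -> ~ P a -> ~ P b -> ~ P (a * b).
Proof. by move=> [_ [_ H]] na nb /H []. Qed.

Lemma prime_notin_exp (P : R -> Prop) a k : prime_ideal P -> ~ P a -> ~ P (a ^+ k).
Proof.
move=> Pp na; elim: k => [|k IH]; first by rewrite expr0; case: Pp => _ [].
by rewrite exprS; apply: prime_notin_mul.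
Qed.

Lemma maximal_ideal_eq (P Q : R -> Prop) : maximal_ideal P -> maximal_ideal Q ->
  sub_ideal P Q -> forall s, P s <-> Q s.
Proof.
move=> [PI [nP1 Pm]] [QI [nQ1 Qm]] PQ s; split; first exact: PQ.
by case: (Pm Q QI PQ) => [QP|/nQ1 []]; [exact: QP].
Qed.

Lemma not_sub_ideal (P Q : R -> Prop) : ~ sub_ideal P Q -> exists y, P y /\ ~ Q y.
Proof.
move=> h; apply: NNPP => h'; apply: h => y Py.
by apply: NNPP => nQy; apply: h'; exists y.
Qed.

Lemma notin_zero_ideal (P : R -> Prop) s : ~ (exists x, P x /\ x != 0) -> s != 0 -> ~ P s.
Proof. by move=> h ns Ps; apply: h; exists s. Qed.

(* [prod_sub L I]: the product of the ideals in L is contained in I. *)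
Fixpoint prod_sub (L : seq (R -> Prop)) (I : R -> Prop) : Prop :=
  if L is P :: L' then forall x, P x -> prod_sub L' (fun y => I (x * y)) else I 1.

Lemma prod_sub_mono L (I J : R -> Prop) : sub_ideal I J -> prod_sub L I -> prod_sub L J.
Proof.
elim: L I J => [|P L IH] I J /= IJ; first exact: IJ.
by move=> H x Px; apply: (IH _ _ _ (H x Px)) => y; apply: IJ.
Qed.

Lemma prod_sub_cat L1 L2 (I1 I2 J : R -> Prop) : prod_sub L1 I1 -> prod_sub L2 I2 ->
  (forall a b, I1 a -> I2 b -> J (a * b)) -> prod_sub (L1 ++ L2) J.
Proof.
elim: L1 I1 J => [|P L1 IH] I1 J /=.
  by move=> I11 H2 H; apply: prod_sub_mono H2 => b Ib; rewrite -(mul1r b); apply: H.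
move=> H1 H2 H x Px; apply: (IH _ _ (H1 x Px) H2) => a b Ia Ib.
by rewrite mulrA; apply: H.
Qed.

Lemma prod_sub_drop L1 (Q : R -> Prop) L2 (I : R -> Prop) :
  prod_sub (L1 ++ Q :: L2) I -> forall x, Q x -> prod_sub (L1 ++ L2) (fun y => I (x * y)).
Proof.
elim: L1 I => [|P L1 IH] I //= H x Qx y Py.
by apply: prod_sub_mono (IH _ (H y Py) x Qx) => z; rewrite mulrCA.
Qed.

Lemma prod_sub_forall L (H : R -> Prop) (I : R -> R -> Prop) :
  (forall p, H p -> prod_sub L (I p)) -> prod_sub L (fun y => forall p, H p -> I p y).
Proof.
elim: L I => [|P L IH] I /= h; first by move=> p; apply: h.
by move=> x Px; apply: (IH (fun p y => I p (x * y))) => p Hp; apply: h p Hp x Px.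
Qed.

Lemma prod_sub_witness L (I J : R -> Prop) : prod_sub L J -> ~ prod_sub L I ->
  exists y, J y /\ ~ I y.
Proof.
elim: L I J => [|P L IH] I J /=; first by move=> J1 nI1; exists 1.
move=> HJ nI; have [x [Px nx]] : exists x, P x /\ ~ prod_sub L (fun y => I (x * y)).
  by apply: NNPP => h; apply: nI => x Px; apply: NNPP => h'; apply: h; exists x.
by have [y [Jy nIy]] := IH _ _ (HJ x Px) nx; exists (x * y).
Qed.

Lemma prime_over_prod_sub L (P I : R -> Prop) : prime_ideal P ->
  (forall Q, List.In Q L -> exists x, Q x /\ ~ P x) -> prod_sub L I -> ~ sub_ideal I P.
Proof.
move=> Pp; elim: L I => [|Q L IH] I /= hL; first by move=> I1 IP; case: Pp => _ [/(_ (IP 1 I1))].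
move=> H IP; have [x [Qx nPx]] := hL Q (or_introl erefl).
apply: (IH (fun y => I (x * y)) (fun Q' h => hL Q' (or_intror h)) (H x Qx)).
by move=> y /IP; case: Pp => _ [_ Pm] /Pm [/nPx []|].
Qed.

Definition nonzero_primes (L : seq (R -> Prop)) :=
  forall Q, List.In Q L -> prime_ideal Q /\ exists x, Q x /\ x != 0.

Lemma nonzero_ideal_over_prod_primes (hN : noetherian_dom R) (I : R -> Prop) :
  is_ideal I -> (exists x, I x /\ x != 0) ->
  exists L, nonzero_primes L /\ prod_sub L I.
Proof.
move=> II Inz; apply: NNPP => hno.
have [M [[MI [Mnz nM]] Mmax]] := noetherian_maximal hN
  (F := fun J => is_ideal J /\ (exists x, J x /\ x != 0) /\
                 ~ exists L, nonzero_primes L /\ prod_sub L J) (fun J h => h.1)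
  (ex_intro _ I (conj II (conj Inz hno))).
have nM1 : ~ M 1 by move=> M1; apply: nM; exists [::]; split => // Q [].
have [a [b [Mab [nMa nMb]]]] : exists a b, M (a * b) /\ ~ M a /\ ~ M b.
  apply: NNPP => h; apply: nM; exists [:: M]; split; last first.
    by move=> x Mx /=; rewrite mulr1.
  move=> Q [<-|[]]; split => //; split => //; split => // a b Mab.
  case: (classic (M a)) => [|nMa]; [by left | right].
  by apply: NNPP => nMb; apply: h; exists a, b.
have enlarge c : ~ M c -> exists L, nonzero_primes L /\ prod_sub L (ideal_adjoin M c).
  move=> nMc; apply: NNPP => h; apply: nMc.
  apply: (Mmax (ideal_adjoin M c)) (ideal_adjoin_mem c MI) => //.
    split; first exact: ideal_adjoin_ideal.
    split => //; case: Mnz => x [Mx nx].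
    by exists x; split => //; apply: sub_ideal_adjoin.
  exact: sub_ideal_adjoin.
have [L1 [P1 H1]] := enlarge a nMa.
have [L2 [P2 H2]] := enlarge b nMb.
apply: nM; exists (L1 ++ L2); split.
  by move=> Q /List.in_app_iff [] ?; [apply: P1 | apply: P2].
apply: (prod_sub_cat H1 H2) => x y [m [r [Mm ->]]] [m' [r' [Mm' ->]]].
have -> : (m + r * a) * (m' + r' * b) =
          m * (m' + r' * b) + (r * a) * m' + (r * r') * (a * b) by ring.
by apply: idealD MI (idealD MI (idealMr _ MI Mm) (idealM _ MI Mm')) (idealM _ MI Mab).
Qed.

Lemma exists_minimal_nat (Pn : nat -> Prop) : (exists n, Pn n) ->
  exists n, Pn n /\ forall m, (m < n)%N -> ~ Pn m.
Proof.
move=> [n Pnn]; elim/ltn_ind: n Pnn => n IH Pnn.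
case: (classic (exists m, (m < n)%N /\ Pn m)) => [[m [ltm Pm]]|h]; first exact: IH ltm Pm.
by exists n; split => // m ltm Pm; apply: h; exists m.
Qed.

Definition in_inv_ideal (P : R -> Prop) (q : K) :=
  forall y, P y -> exists z, q * y%:F = z%:F.

(* Determinant trick: t is an eigenvalue of a matrix over R acting on generators of P. *)
Lemma stable_frac_integral (hN : noetherian_dom R) (hI : integrally_closed_dom R)
    (P : R -> Prop) (t : K) : is_ideal P -> (exists x, P x /\ x != 0) ->
  (forall p, P p -> exists z, P z /\ t * p%:F = z%:F) -> exists r, t = r%:F.
Proof.
move=> PI [x0 [Px0 nx0]] Ht.
have [s Hs] := hN P PI.
have /fin_all_exists [f Hf] : forall i : 'I_(size s), exists c : 'I_(size s) -> R,
    t * (s`_i)%:F = (\sum_(j < size s) c j * s`_j)%:F.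
  move=> i; have [z [Pz ->]] := Ht _ (ideal_generator Hs (ltn_ord i)).
  by have [c ->] := (Hs z).1 Pz; exists c.
pose A : 'M[R]_(size s) := \matrix_(i < size s, j < size s) f j i.
pose v := \row_i (s`_i)%:F : 'rV[K]_(size s).
have ev : v *m map_mx (@tofrac R) A = t *: v.
  apply/rowP => j; rewrite !mxE Hf rmorph_sum /=.
  by apply: eq_bigr => i _; rewrite !mxE rmorphM /= mulrC.
have vnz : v != 0.
  apply/eqP => v0; move: nx0; have [c ->] := (Hs x0).1 Px0.
  rewrite big1 ?eqxx // => i _.
  have /eqP := congr1 (fun w : 'rV[K]_(size s) => w 0 i) v0; rewrite !mxE.
  by rewrite tofrac_eq0 => /eqP ->; rewrite mulr0.
have : eigenvalue (map_mx (@tofrac R) A) t by apply/eigenvalueP; exists v.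
rewrite eigenvalue_root_char -map_char_poly => rt.
exact: hI _ _ (char_poly_monic A) rt.
Qed.

(* Take a product of nonzero primes inside aR, with a in P, of minimal length. One
   factor is P; dropping it gives b outside aR with b P inside aR, and t = b / a. *)
Lemma maximal_inv_ideal_nonintegral (hR : dedekind R) (P : R -> Prop) :
  maximal_ideal P -> (exists x, P x /\ x != 0) ->
  exists t, (~ exists r, t = r%:F) /\ in_inv_ideal P t.
Proof.
case: hR => hN _ hPM Pmax [a [Pa na]].
have Pp := maximal_ideal_prime Pmax; case: (Pmax) => PI [nP1 _].
pose aR y := exists r, y = a * r.
have aRI : is_ideal aR.
  split; first by exists 0; rewrite mulr0.
  split; first by move=> x y [r ->] [r' ->]; exists (r + r'); rewrite mulrDr.
  by move=> r x [r' ->]; exists (r * r'); rewrite mulrCA.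
have aRP : sub_ideal aR P by move=> y [r ->]; apply: idealMr.
have aRa : aR a by exists 1; rewrite mulr1.
have [L0 hL0] := nonzero_ideal_over_prod_primes hN aRI (ex_intro _ a (conj aRa na)).
have [n0 [[L [[nzL pL] sL]] minL]] := exists_minimal_nat
  (ex_intro (fun n => exists L, (nonzero_primes L /\ prod_sub L aR) /\ size L = n) _
     (ex_intro _ L0 (conj hL0 erefl))).
have [Q [inQ QP]] : exists Q, List.In Q L /\ sub_ideal Q P.
  apply: NNPP => h; apply: (prime_over_prod_sub Pp _ pL aRP) => Q inQ.
  apply: NNPP => h'; apply: h; exists Q; split => // y Qy.
  by apply: NNPP => nPy; apply: h'; exists y.
have [L1 [L2 eL]] := List.in_split _ _ inQ.
have {}eL : L = L1 ++ Q :: L2 by rewrite eL; elim: L1 {eL} => //= ? ? ->.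
have PQ : sub_ideal P Q.
  have [Qp Qnz] := nzL Q inQ; have [_ [_ Qm]] := hPM Q Qp Qnz.
  by case: (Qm P PI QP) => // /nP1.
have npL : ~ prod_sub (L1 ++ L2) aR.
  move=> h; apply: (minL (size (L1 ++ L2))).
    by rewrite -sL eL !size_cat /= addnS ltnS leqnn.
  exists (L1 ++ L2); split => //; split => // Q' /List.in_app_iff inQ'.
  by apply: nzL; rewrite eL; apply/List.in_app_iff; case: inQ'; [left | right; right].
have pJ : prod_sub (L1 ++ L2) (fun y => forall p, P p -> aR (p * y)).
  by apply: prod_sub_forall => p Pp'; apply: (prod_sub_drop (Q := Q)); [rewrite -eL | apply: PQ].
have [b [Jb nb]] := prod_sub_witness pJ npL.
have naF : a%:F != 0 by rewrite tofrac_eq0.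
exists (b%:F / a%:F); split.
  move=> [r er]; apply: nb; exists r.
  by apply/eqP; rewrite -tofrac_eq rmorphM /= -er mulrC divfK.
move=> y Py; have [r e] := Jb y Py; exists r.
by rewrite mulrAC -rmorphM /= [b * y]mulrC e rmorphM /= mulrAC divff // mul1r.
Qed.

Lemma sum_in_ideal_tofrac (P : R -> Prop) (l : seq (R * K)) : is_ideal P ->
  (forall pq, pq \in l -> exists z, pq.1%:F * pq.2 = z%:F /\ P z) ->
  exists w, P w /\ \sum_(pq <- l) pq.1%:F * pq.2 = w%:F.
Proof.
move=> PI; elim: l => [|pq l IH] H.
  by exists 0; rewrite big_nil rmorph0; split => //; apply: ideal0.
have [z [ez Pz]] := H pq (mem_head _ _).
have [w [Pw ew]] := IH (fun pq' h => H pq' (mem_behead (s := pq :: l) h)).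
by exists (z + w); split; [apply: idealD | rewrite big_cons ez ew rmorphD].
Qed.

(* p generates the maximal ideal of R_P: q is in P^-1 and q p = z is a unit at P. *)
Definition uniformizer (P : R -> Prop) (p : R) (q : K) (z : R) :=
  [/\ P p, in_inv_ideal P q, q * p%:F = z%:F & ~ P z].

Lemma uniformizer_neq0 P p q z : is_ideal P -> uniformizer P p q z -> p%:F != 0 /\ q != 0.
Proof.
move=> PI [_ _ ez nz]; split; apply/eqP => h; apply: nz; move: ez;
  rewrite h ?mul0r ?mulr0 => /esym/eqP; rewrite tofrac_eq0 => /eqP ->; exact: ideal0.
Qed.

(* P <= P P^-1 <= R; equality with P would make t P <= P, hence t integral. *)
Lemma maximal_ideal_invertible (hR : dedekind R) (P : R -> Prop) :
  maximal_ideal P -> (exists x, P x /\ x != 0) -> exists p q z, uniformizer P p q z.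
Proof.
move=> Pmax Pnz; have [t [ntR tinv]] := maximal_inv_ideal_nonintegral hR Pmax Pnz.
case: (Pmax) => PI [nP1 Pm].
pose S x := exists l : seq (R * K),
  (forall pq, pq \in l -> P pq.1 /\ in_inv_ideal P pq.2) /\
  x%:F = \sum_(pq <- l) pq.1%:F * pq.2.
have SI : is_ideal S.
  split; first by exists [::]; rewrite big_nil rmorph0.
  split.
    move=> x y [l [fl ex]] [l' [fl' ey]]; exists (l ++ l'); split.
      by move=> pq; rewrite mem_cat => /orP []; [apply: fl | apply: fl'].
    by rewrite big_cat tofracD ex ey.
  move=> r x [l [fl ex]]; exists [seq (r * pq.1, pq.2) | pq <- l]; split.
    by move=> pq /mapP [pq' /fl [h1 h2] ->]; split => //; apply: idealM.
  rewrite big_map tofracM ex mulr_sumr; apply: eq_bigr => pq _ /=.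
  by rewrite tofracM mulrA.
have PS : sub_ideal P S.
  move=> x Px; exists [:: (x, 1)]; split; last by rewrite big_seq1 mulr1.
  by move=> pq; rewrite inE => /eqP -> /=; split => // y _; exists y; rewrite mul1r.
case: (Pm S SI PS) => [SP|[l [fl e1]]].
  case: ntR; case: hR => hN hI _; apply: (stable_frac_integral hN hI PI Pnz) => p Pp.
  have [z ez] := tinv p Pp; exists z; split => //; apply: SP; exists [:: (p, t)].
  by split; [move=> pq; rewrite inE => /eqP -> | rewrite big_seq1 mulrC].
suff [pq [inl [z [ez nPz]]]] : exists pq, pq \in l /\
    exists z, pq.2 * pq.1%:F = z%:F /\ ~ P z.
  by have [h1 h2] := fl pq inl; exists pq.1, pq.2, z; split.
apply: NNPP => h.
have [w [Pw ew]] : exists w, P w /\ \sum_(pq <- l) pq.1%:F * pq.2 = w%:F.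
  apply: sum_in_ideal_tofrac => // pq inl.
  have [h1 h2] := fl pq inl; have [z ez] := h2 _ h1.
  exists z; split; first by rewrite mulrC.
  by apply: NNPP => nPz; apply: h; exists pq; split => //; exists z.
by apply: nP1; move/eqP: e1; rewrite ew tofrac_eq => /eqP ->.
Qed.

End IdealTheory.

Section Localization.
Variable R : idomainType.
Local Notation K := {fraction R}.
Local Notation "x %:F" := (@tofrac R x).

Definition frac_submod (M : K -> Prop) :=
  M 0 /\ (forall x y, M x -> M y -> M (x + y)) /\ (forall r x, M x -> M (r%:F * x)).

Lemma frac_submod0 M : frac_submod M -> M 0. Proof. by case. Qed.
Lemma frac_submodD M x y : frac_submod M -> M x -> M y -> M (x + y).
Proof. by case=> _ [H _]; apply: H. Qed.
Lemma frac_submodZ M r x : frac_submod M -> M x -> M (r%:F * x).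
Proof. by case=> _ [_ H]; apply: H. Qed.

Lemma frac_submod_sum M (I : Type) (l : seq I) (F : I -> K) : frac_submod M ->
  (forall i, List.In i l -> M (F i)) -> M (\sum_(i <- l) F i).
Proof.
move=> MM; elim: l => [|i l IH] H; first by rewrite big_nil; apply: frac_submod0.
rewrite big_cons; apply: frac_submodD (H i (or_introl erefl)) _ => //.
by apply: IH => j h; apply: H; right.
Qed.

Definition inR (x : K) := exists r, x = r%:F.

Lemma frac_submod_inR : frac_submod inR.
Proof.
split; first by exists 0; rewrite tofrac0.
split; first by move=> x y [a ->] [b ->]; exists (a + b); rewrite tofracD.
by move=> r x [a ->]; exists (r * a); rewrite tofracM.
Qed.

Definition loc (P : R -> Prop) (M : K -> Prop) (x : K) := exists s, ~ P s /\ M (s%:F * x).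
Definition locR P := loc P inR.

Lemma loc_of_mem (P : R -> Prop) M x : ~ P 1 -> M x -> loc P M x.
Proof. by move=> nP1 Mx; exists 1; rewrite tofrac1 mul1r. Qed.

Lemma frac_submod_loc (P : R -> Prop) M : prime_ideal P -> frac_submod M ->
  frac_submod (loc P M).
Proof.
move=> Pp MM; have nP1 : ~ P 1 by case: Pp => _ [].
split; first by apply: loc_of_mem => //; apply: frac_submod0.
split.
- move=> x y [s [ns Ms]] [s' [ns' Ms']]; exists (s * s').
  split; first exact: prime_notin_mul.
  rewrite mulrDr; apply: frac_submodD => //.
    by rewrite tofracM mulrAC mulrC; apply: frac_submodZ.
  by rewrite tofracM -mulrA; apply: frac_submodZ.
- move=> r x [s [ns Ms]]; exists s; split => //.
  by rewrite mulrCA; apply: frac_submodZ.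
Qed.

Lemma loc_mul (P : R -> Prop) M a x : prime_ideal P -> frac_submod M ->
  locR P a -> loc P M x -> loc P M (a * x).
Proof.
move=> Pp MM [s [ns [r er]]] [s' [ns' Ms']]; exists (s * s').
split; first exact: prime_notin_mul.
by rewrite tofracM mulrACA er; apply: frac_submodZ.
Qed.

Lemma locR_mul (P : R -> Prop) a b : prime_ideal P -> locR P a -> locR P b -> locR P (a * b).
Proof. by move=> Pp ha hb; apply: loc_mul => //; apply: frac_submod_inR. Qed.

Lemma locR_tofrac (P : R -> Prop) r : prime_ideal P -> locR P r%:F.
Proof. by move=> Pp; apply: loc_of_mem; [case: Pp => _ [] | exists r]. Qed.

Lemma locR_exp (P : R -> Prop) x k : prime_ideal P -> locR P x -> locR P (x ^+ k).
Proof.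
move=> Pp hx; elim: k => [|k IH]; first by rewrite expr0 -tofrac1; apply: locR_tofrac.
by rewrite exprS; apply: locR_mul.
Qed.

Lemma locR_inv_tofrac (P : R -> Prop) s : is_ideal P -> ~ P s -> locR P (s%:F)^-1.
Proof.
move=> PI ns; exists s; split => //; exists 1; rewrite tofrac1 divff //.
by rewrite tofrac_eq0; apply: ideal_nonzero_of_notin ns.
Qed.

Lemma loc_eq (P Q : R -> Prop) M x : (forall s, P s <-> Q s) -> loc P M x -> loc Q M x.
Proof. by move=> PQ [s [ns h]]; exists s; split => // /PQ. Qed.

Lemma mem_of_loc (hN : noetherian_dom R) M x : frac_submod M ->
  (forall P, maximal_ideal P -> loc P M x) -> M x.
Proof.
move=> MM H; pose I r := M (r%:F * x).
have II : is_ideal I.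
  split; first by rewrite /I tofrac0 mul0r; apply: frac_submod0.
  split; first by move=> a b Ia Ib; rewrite /I tofracD mulrDl; apply: frac_submodD.
  by move=> r a Ia; rewrite /I tofracM -mulrA; apply: frac_submodZ.
case: (classic (I 1)) => [|nI1]; first by rewrite /I tofrac1 mul1r.
have [P [Pm IP]] := maximal_ideal_over hN II nI1.
by have [s [ns Is]] := H P Pm; case: ns; apply: IP.
Qed.

Lemma inv_ideal_locR (P Q : R -> Prop) q : in_inv_ideal P q ->
  (exists y, P y /\ ~ Q y) -> locR Q q.
Proof.
move=> qinv [y [Py nQy]]; have [z ez] := qinv y Py.
by exists y; split => //; exists z; rewrite mulrC.
Qed.

End Localization.

Section DiscreteValuation.
Variable R : idomainType.
Local Notation K := {fraction R}.
Local Notation "x %:F" := (@tofrac R x).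
Variables (P : R -> Prop) (p : R) (q : K) (z : R).
Hypotheses (hN : noetherian_dom R) (Pm : maximal_ideal P) (hu : uniformizer P p q z).

Let Pprime : prime_ideal P := maximal_ideal_prime Pm.
Let PI : is_ideal P. Proof. by case: Pm. Qed.
Let nP1 : ~ P 1. Proof. by case: Pm => _ []. Qed.
Let Pp : P p. Proof. by case: hu. Qed.
Let pF_neq0 : p%:F != 0. Proof. by case: (uniformizer_neq0 PI hu). Qed.
Let pX_neq0 k : p%:F ^+ k != 0. Proof. exact: expf_neq0. Qed.

Definition locR_unit x := x != 0 /\ locR P x /\ locR P x^-1.

Lemma locR_unitM x y : locR_unit x -> locR_unit y -> locR_unit (x * y).
Proof.
move=> [hx [h1 h2]] [hy [h3 h4]]; split; first by rewrite mulf_neq0.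
by split; [apply: locR_mul | rewrite invfM; apply: locR_mul].
Qed.

Lemma locR_unitV x : locR_unit x -> locR_unit x^-1.
Proof. by move=> [hx [h1 h2]]; split; [rewrite invr_eq0 | rewrite invrK]. Qed.

Lemma locR_unit_tofrac s : ~ P s -> locR_unit s%:F.
Proof.
move=> ns; split; first by rewrite tofrac_eq0 (ideal_nonzero_of_notin PI ns).
by split; [apply: locR_tofrac | apply: locR_inv_tofrac].
Qed.

Lemma locR_pX k : locR P (p%:F ^+ k).
Proof. by rewrite -tofracXn; apply: locR_tofrac. Qed.

(* If x^-1 is not in R_P then x lies in the maximal ideal of R_P, which is p R_P. *)
Lemma locR_divp x : locR P x -> ~ locR P x^-1 -> locR P (x / p%:F).
Proof.
move=> [s [ns [r er]]] nx; case: (classic (P r)) => [Pr|nPr].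
  have [_ qinv ez _] := hu; have [y ey] := qinv r Pr.
  exists (s * z); split; first by case: hu => _ _ _; apply: prime_notin_mul.
  exists y; rewrite tofracM -ez -ey -er.
  by rewrite -[RHS](mulfK pF_neq0); ring.
have xnz : x != 0.
  apply/eqP => x0; apply: nPr; move: er; rewrite x0 mulr0 => /esym/eqP.
  by rewrite tofrac_eq0 => /eqP ->; apply: ideal0.
by case: nx; exists r; split => //; exists s; rewrite -er mulfK.
Qed.

(* Krull's intersection theorem, via the ascending chain of ideals
   {r | r p^k / x \in R_P}. *)
Lemma locR_not_divpX x : x != 0 -> locR P x -> exists N, ~ locR P (x / p%:F ^+ N).
Proof.
move=> nx hx; apply: NNPP => H.
have H' N : locR P (x / p%:F ^+ N) by apply: NNPP => h; apply: H; exists N.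
have locRK : frac_submod (locR P) := frac_submod_loc Pprime (@frac_submod_inR R).
pose I k r := locR P (r%:F * p%:F ^+ k / x).
have II k : is_ideal (I k).
  split; first by rewrite /I tofrac0 !mul0r; apply: frac_submod0.
  split; first by move=> a b Ia Ib; rewrite /I tofracD !mulrDl; apply: frac_submodD.
  by move=> r a Ia; rewrite /I tofracM -!mulrA; apply: (frac_submodZ r locRK); rewrite !mulrA.
have mono k : sub_ideal (I k) (I k.+1).
  move=> r Ir; have := frac_submodZ p locRK Ir; rewrite /I exprS.
  suff -> : p%:F * (r%:F * p%:F ^+ k / x) = r%:F * (p%:F * p%:F ^+ k) / x by [].
  by ring.
have [k0 Hk0] := noetherian_chain_stationary hN II mono.
have [s [ns [r er]]] := H' k0.+1.
have Ir : I k0.+1 r.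
  exists 1; split => //; exists s.
  by rewrite -er tofrac1 mul1r mulrA divfK ?mulfK ?pX_neq0.
have /(locR_mul Pprime (locR_inv_tofrac PI ns)) := Hk0 _ _ Ir.
have -> : (s%:F)^-1 * (r%:F * p%:F ^+ k0 / x) = p%:F^-1.
  have nsF : s%:F != 0 by rewrite tofrac_eq0 (ideal_nonzero_of_notin PI ns).
  rewrite -er exprS invfM.
  have -> : (s%:F)^-1 * (s%:F * (x * ((p%:F)^-1 * (p%:F ^+ k0)^-1)) * p%:F ^+ k0 / x) =
    ((s%:F)^-1 * s%:F) * (x / x) * (p%:F ^+ k0 / p%:F ^+ k0) * (p%:F)^-1 by ring.
  by rewrite mulVf // !divff ?pX_neq0 // !mul1r.
move=> [s1 [ns1 [r1 e1]]]; apply: ns1.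
have -> : s1 = r1 * p by apply/eqP; rewrite -tofrac_eq tofracM -e1 mulfVK.
exact: idealM.
Qed.

Lemma locR_factor x : x != 0 -> locR P x ->
  exists k u, locR_unit u /\ x = p%:F ^+ k * u.
Proof.
move=> nx hx; have [N hN'] := locR_not_divpX nx hx.
elim: N x nx hx hN' => [|N IH] x nx hx hN'.
  by move: hN'; rewrite expr0 divr1.
case: (classic (locR P x^-1)) => [hi|nhi].
  by exists 0%N, x; split; [split | rewrite expr0 mul1r].
have nx2 : x / p%:F != 0 by rewrite mulf_neq0 // invr_eq0.
have hN2 : ~ locR P (x / p%:F / p%:F ^+ N) by rewrite -mulrA -invfM -exprS.
have [k [u [hu' e]]] := IH _ nx2 (locR_divp hx nhi) hN2.
exists k.+1, u; split => //; rewrite exprS -mulrA -e.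
by rewrite mulrC divfK.
Qed.

Lemma frac_factor x : x != 0 ->
  exists k u, locR_unit u /\ (x = p%:F ^+ k * u \/ x * p%:F ^+ k = u).
Proof.
have [a [b [nb ->]]] := tofrac_quot x => nx.
have na : a%:F != 0 by apply: contraNneq nx => ->; rewrite mul0r.
have nbF : b%:F != 0 by rewrite tofrac_eq0.
have [i [u [hu1 ea]]] := locR_factor na (locR_tofrac a Pprime).
have [j [u' [hu' eb]]] := locR_factor nbF (locR_tofrac b Pprime).
have hq : locR_unit (u / u') by apply: locR_unitM => //; apply: locR_unitV.
have nu' : u' != 0 by case: hu'.
rewrite ea eb; case: (leqP j i) => h.
  exists (i - j)%N, (u / u'); split => //; left.
  rewrite -{1}(subnK h) exprD invfM.
  have -> : p%:F ^+ (i - j) * p%:F ^+ j * u * ((p%:F ^+ j)^-1 * u'^-1) =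
    p%:F ^+ (i - j) * (u / u') * (p%:F ^+ j / p%:F ^+ j) by ring.
  by rewrite divff ?mulr1 ?pX_neq0.
exists (j - i)%N, (u / u'); split => //; right.
rewrite -{1}(subnK (ltnW h)) exprD invfM.
have -> : p%:F ^+ i * u * ((p%:F ^+ (j - i) * p%:F ^+ i)^-1 * u'^-1) * p%:F ^+ (j - i) =
  u / u' * (p%:F ^+ i / p%:F ^+ i) * (p%:F ^+ (j - i) / p%:F ^+ (j - i)) by rewrite invfM; ring.
by rewrite !divff ?mulr1 ?pX_neq0.
Qed.

Lemma locR_inv_divp x : x != 0 -> ~ locR P x -> locR P (x^-1 / p%:F).
Proof.
move=> nx nhx; have [k [u [[un [hu1 hui]] [e|e]]]] := frac_factor nx.
  by case: nhx; rewrite e; apply: locR_mul => //; apply: locR_pX.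
case: k e => [|k] e; first by case: nhx; move: e; rewrite expr0 mulr1 => ->.
have -> : x^-1 / p%:F = p%:F ^+ k / u.
  rewrite -e exprS !invfM.
  have -> : p%:F ^+ k * (x^-1 * ((p%:F)^-1 * (p%:F ^+ k)^-1)) =
    x^-1 / p%:F * (p%:F ^+ k / p%:F ^+ k) by ring.
  by rewrite divff ?mulr1 ?pX_neq0.
by apply: locR_mul => //; apply: locR_pX.
Qed.

Lemma locR_unit_scale x : x != 0 -> exists w,
  ((exists k, w = p%:F ^+ k) \/ (exists k, w = q ^+ k)) /\ locR_unit (x * w).
Proof.
move=> nx; have [k [u [hu1 [e|e]]]] := frac_factor nx; last first.
  by exists (p%:F ^+ k); split; [left; exists k | rewrite e].
exists (q ^+ k); split; first by right; exists k.
have [_ _ ez nz] := hu.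
have -> : x * q ^+ k = u * z%:F ^+ k by rewrite e -ez exprMn; ring.
by apply: locR_unitM => //; rewrite -tofracXn; apply: locR_unit_tofrac; apply: prime_notin_exp.
Qed.

Lemma locR_div_qX x : x != 0 -> exists k, locR P (x / q ^+ k).
Proof.
move=> nx; have [k [u [[un [hu1 hui]] [e|e]]]] := frac_factor nx.
  by exists 0%N; rewrite expr0 divr1 e; apply: locR_mul => //; apply: locR_pX.
have [_ _ ez nz] := hu.
exists k; have -> : x / q ^+ k = u / z%:F ^+ k.
  rewrite -e -ez exprMn invfM.
  have -> : x * p%:F ^+ k * ((q ^+ k)^-1 * (p%:F ^+ k)^-1) =
    x / q ^+ k * (p%:F ^+ k / p%:F ^+ k) by ring.
  by rewrite divff ?mulr1 ?pX_neq0.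
rewrite -tofracXn; apply: locR_mul => //.
by apply: locR_inv_tofrac => //; apply: prime_notin_exp.
Qed.

Lemma locR_ratio M x y : frac_submod M -> M x -> x != 0 -> y != 0 ->
  ~ loc P M (q * y) -> locR P (x / y).
Proof.
move=> MM Mx nx ny nqy; apply: NNPP => nxy.
have [s [ns [r er]]] := locR_inv_divp (mulf_neq0 nx (invr_neq0 ny)) nxy.
apply: nqy; exists s; split => //.
have [_ _ ez _] := hu.
have -> : s%:F * (q * y) = (r * z)%:F * x.
  rewrite tofracM -er -ez invfM invrK.
  have -> : s%:F * (x^-1 * y / p%:F) * (q * p%:F) * x =
    s%:F * (q * y) * (x / x) * (p%:F / p%:F) by ring.
  by rewrite !divff ?mulr1.
exact: frac_submodZ.
Qed.

End DiscreteValuation.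

Section ColonModules.
Variable R : idomainType.
Local Notation K := {fraction R}.
Local Notation "x %:F" := (@tofrac R x).

Definition colon (E D : K -> Prop) (t : K) := forall d, D d -> E (t * d).
Definition prod_mod (T D : K -> Prop) (e : K) := exists l : seq (K * K),
  (forall pr, List.In pr l -> T pr.1 /\ D pr.2) /\ e = \sum_(pr <- l) pr.1 * pr.2.
Definition sum_mod (T : K -> Prop) (e : K) := exists l : seq K,
  (forall t, List.In t l -> T t) /\ e = \sum_(t <- l) t.
Definition scale_closed (T : K -> Prop) := forall r t, T t -> T (r%:F * t).

Lemma colon_scale_closed E D : frac_submod E -> scale_closed (colon E D).
Proof. by move=> EK r t ht d Dd; rewrite -mulrA; apply: frac_submodZ (ht d Dd). Qed.

Lemma prod_mod_submod T D : scale_closed T -> frac_submod (prod_mod T D).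
Proof.
move=> TR; split; first by exists [::]; rewrite big_nil.
split.
  move=> x y [l [hl ->]] [l' [hl' ->]]; exists (l ++ l'); split; last by rewrite big_cat.
  by move=> pr /List.in_app_iff [] ?; [apply: hl | apply: hl'].
move=> r x [l [hl ->]]; exists (map (fun pr => (r%:F * pr.1, pr.2)) l); split.
  move=> pr hpr; have [pr' [/hl [h1 h2] ->]] := In_map_inv hpr.
  by split => //; apply: TR.
by rewrite big_map mulr_sumr; apply: eq_bigr => pr _; rewrite mulrA.
Qed.

Lemma sum_mod_submod T : scale_closed T -> frac_submod (sum_mod T).
Proof.
move=> TR; split; first by exists [::]; rewrite big_nil.
split.
  move=> x y [l [hl ->]] [l' [hl' ->]]; exists (l ++ l'); split; last by rewrite big_cat.
  by move=> pr /List.in_app_iff [] ?; [apply: hl | apply: hl'].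
move=> r x [l [hl ->]]; exists (map (fun t => r%:F * t) l); split.
  by move=> t ht; have [t' [/hl h ->]] := In_map_inv ht; apply: TR.
by rewrite big_map mulr_sumr.
Qed.

Definition uniformizer_pow (p : R) (q w : K) :=
  (exists k, w = p%:F ^+ k) \/ (exists k, w = q ^+ k).

Lemma uniformizer_pow_locR P Q p q z w : uniformizer P p q z -> prime_ideal Q ->
  (exists y, P y /\ ~ Q y) -> uniformizer_pow p q w -> locR Q w.
Proof.
move=> [_ qinv _ _] Qpr PQ [[k ->]|[k ->]]; first by rewrite -tofracXn; apply: locR_tofrac.
by apply: locR_exp => //; apply: inv_ideal_locR qinv PQ.
Qed.

(* Away from P the factor w is integral, so only the localization at P matters. *)
Lemma colon_of_loc (hN : noetherian_dom R) P p q z (E D : K -> Prop) (t w : K) :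
  frac_submod E -> maximal_ideal P -> uniformizer P p q z -> uniformizer_pow p q w ->
  colon E D t -> (forall d, D d -> loc P E (t * w * d)) -> colon E D (t * w).
Proof.
move=> EK Pm hu hw tcol hloc d Dd; apply: (mem_of_loc hN EK) => Q Qm.
case: (classic (sub_ideal P Q)) => [PQ|/not_sub_ideal nPQ].
  exact: loc_eq (maximal_ideal_eq Pm Qm PQ) (hloc d Dd).
have Qpr := maximal_ideal_prime Qm; have nQ1 : ~ Q 1 by case: Qm => _ [].
have := loc_mul Qpr EK (uniformizer_pow_locR hu Qpr nPQ hw) (loc_of_mem nQ1 (tcol d Dd)).
by rewrite mulrCA mulrA.
Qed.

End ColonModules.

Section ColonCover.
Variable R : idomainType.
Local Notation K := {fraction R}.
Local Notation "x %:F" := (@tofrac R x).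
Variables (hN : noetherian_dom R) (D E : K -> Prop) (u : K).
Hypotheses (DK : frac_submod D) (EK : frac_submod E) (Dnz : exists d, D d /\ d != 0)
  (nu : u != 0) (uDE : forall d, D d -> E (u * d)).

Local Notation N := (prod_mod (colon E D) D).

Lemma colon_prod_mem t d : colon E D t -> D d -> N (t * d).
Proof. by move=> ht Dd; exists [:: (t, d)]; split; [move=> pr [<-|[]] | rewrite big_seq1]. Qed.

Lemma colon_cover_loc_zero P e : ~ (exists x, P x /\ x != 0) -> E e -> loc P N e.
Proof.
move=> Pz Ee; have [d0 [Dd0 nd0]] := Dnz.
have [a [b [nb eab]]] := tofrac_quot (e / (u * d0)).
exists b; split; first exact: notin_zero_ideal.
have -> : b%:F * e = u * (a%:F * d0).
  rewrite -[e](divfK (mulf_neq0 nu nd0)) eab.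
  have -> : b%:F * (a%:F / b%:F * (u * d0)) = b%:F / b%:F * (u * (a%:F * d0)) by ring.
  by rewrite divff ?mul1r // tofrac_eq0.
by apply: colon_prod_mem uDE _; apply: frac_submodZ.
Qed.

Lemma colon_cover_loc_unbounded P p q z e : maximal_ideal P -> uniformizer P p q z ->
  (forall k d, D d -> loc P E (u * q ^+ k * d)) -> E e -> e != 0 -> loc P N e.
Proof.
move=> Pm hu unb Ee ne; have [d0 [Dd0 nd0]] := Dnz.
have [_ qnz] := uniformizer_neq0 (proj1 Pm) hu.
have nz : e / (u * d0) != 0 by rewrite mulf_neq0 // invr_eq0 mulf_neq0.
have [k [s [ns [r er]]]] := locR_div_qX hN Pm hu nz.
exists s; split => //.
have -> : s%:F * e = u * q ^+ k * (r%:F * d0).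
  rewrite -er invfM.
  have -> : u * q ^+ k * (s%:F * (e * (u^-1 * d0^-1) / q ^+ k) * d0) =
    s%:F * e * (u / u) * (d0 / d0) * (q ^+ k / q ^+ k) by ring.
  by rewrite !divff ?mulr1 ?expf_neq0.
apply: colon_prod_mem; last exact: frac_submodZ.
by apply: (colon_of_loc (w := q ^+ k) hN EK Pm hu) => // [|d Dd]; [right; exists k | apply: unb].
Qed.

(* Take k minimal with u q^(k+1) D not inside E_P: then u q^k is in (E : D),
   and some u q^k d generates E_P. *)
Lemma colon_cover_loc_bounded P p q z e : maximal_ideal P -> uniformizer P p q z ->
  ~ (forall k d, D d -> loc P E (u * q ^+ k * d)) -> E e -> e != 0 -> loc P N e.
Proof.
move=> Pm hu bnd Ee ne; have nP1 : ~ P 1 by case: Pm => _ [].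
have : exists k d, D d /\ ~ loc P E (u * q ^+ k * d).
  apply: NNPP => h; apply: bnd => k d Dd.
  by apply: NNPP => h'; apply: h; exists k, d.
move=> /exists_minimal_nat [[|k] [[d1 [Dd1 nd1]] mink]].
  by case: nd1; rewrite expr0 mulr1; apply: loc_of_mem => //; apply: uDE.
have tcol : colon E D (u * q ^+ k).
  apply: (colon_of_loc (w := q ^+ k) hN EK Pm hu) => // [|d Dd]; first by right; exists k.
  by apply: NNPP => h; apply: (mink k (ltnSn k)); exists d.
pose y := u * q ^+ k * d1.
have eqy : u * q ^+ k.+1 * d1 = q * y by rewrite /y exprS; ring.
have ny : y != 0.
  apply/eqP => y0; apply: nd1; rewrite eqy y0 mulr0.
  by apply: loc_of_mem => //; apply: frac_submod0.
have [s [ns [r er]]] : locR P (e / y).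
  by apply: (locR_ratio hN Pm hu EK Ee ne ny); rewrite -eqy.
exists s; split => //.
have -> : s%:F * e = u * q ^+ k * (r%:F * d1).
  by rewrite -[e](divfK ny) [LHS]mulrA er /y; ring.
by apply: colon_prod_mem tcol _; apply: frac_submodZ.
Qed.

End ColonCover.

Lemma colon_prod_cover R (hR : dedekind R) (D E : {fraction R} -> Prop) (u : {fraction R}) :
  frac_submod D -> frac_submod E -> (exists d, D d /\ d != 0) -> u != 0 ->
  (forall d, D d -> E (u * d)) -> forall e, E e -> prod_mod (colon E D) D e.
Proof.
move=> DK EK Dnz nu uDE e Ee; have hN : noetherian_dom R by case: hR.
case: (eqVneq e 0) => [->|ne].
  by apply: frac_submod0; apply: prod_mod_submod; apply: colon_scale_closed.
apply: (mem_of_loc hN (prod_mod_submod D (colon_scale_closed (D := D) EK))) => P Pm.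
case: (classic (exists x, P x /\ x != 0)) => [Pnz|Pz]; last first.
  exact: (colon_cover_loc_zero (u := u)) Pz Ee.
have [p [q [z hu]]] := maximal_ideal_invertible hR Pm Pnz.
case: (classic (forall k d, D d -> loc P E (u * q ^+ k * d))) => [unb|bnd].
  exact: colon_cover_loc_unbounded hu unb Ee ne.
exact: colon_cover_loc_bounded hu bnd Ee ne.
Qed.

Section ColonSum.
Variable R : idomainType.
Local Notation K := {fraction R}.
Local Notation "x %:F" := (@tofrac R x).
Variables (hN : noetherian_dom R) (J : K -> Prop) (I : Type) (Jf : I -> K -> Prop) (uf : I -> K).
Hypotheses (JK : frac_submod J) (JfK : forall i, frac_submod (Jf i))
  (J_gen : forall x, J x -> exists l : seq (I * K),
     (forall pr, List.In pr l -> Jf pr.1 pr.2) /\ x = \sum_(pr <- l) pr.2)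
  (uf_neq0 : forall i, uf i != 0) (ufJ : forall i x, J x -> Jf i (uf i * x)).

Local Notation T := (fun t => exists i, colon (Jf i) J t).

Let T_closed : scale_closed T.
Proof. by move=> r t [i ht]; exists i; apply: colon_scale_closed. Qed.

Lemma colon_sum_loc_of_unit (P : R -> Prop) t : T t -> t != 0 -> locR P t^-1 -> loc P (sum_mod T) 1.
Proof.
move=> Tt nt [s [ns [r er]]]; exists s; split => //.
exists [:: r%:F * t]; split; last by rewrite big_seq1 mulr1 -er divfK.
by move=> t' [<-|[]]; apply: T_closed.
Qed.

Lemma colon_sum_loc_zero (P : R -> Prop) (i : I) :
  ~ (exists x, P x /\ x != 0) -> loc P (sum_mod T) 1.
Proof.
move=> Pz; have [a [b [nb eab]]] := tofrac_quot (uf i).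
have na : a != 0.
  by apply: contraNneq (uf_neq0 i) => a0; rewrite eab a0 tofrac0 mul0r.
exists a; split; first exact: notin_zero_ideal.
exists [:: b%:F * uf i]; split.
  by move=> t' [<-|[]]; apply: T_closed; exists i => x; apply: ufJ.
by rewrite big_seq1 mulr1 eab mulrC divfK // tofrac_eq0.
Qed.

Section AtUniformizer.
Variables (P : R -> Prop) (p : R) (q : K) (z : R).
Hypotheses (Pm : maximal_ideal P) (hu : uniformizer P p q z).

Let uf_colon i w : uniformizer_pow p q w ->
  (forall x, J x -> loc P (Jf i) (uf i * w * x)) -> T (uf i * w).
Proof.
by move=> hw hloc; exists i; apply: (colon_of_loc hN (JfK i) Pm hu hw) => // x; apply: ufJ.
Qed.

(* J_P is stable under q, an inverse of the uniformizer: it is a vector space over K. *)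
Lemma colon_sum_loc_stable (i : I) : (forall j, J j -> loc P J (q * j)) -> loc P (sum_mod T) 1.
Proof.
move=> qJ; have Ppr := maximal_ideal_prime Pm; have nP1 : ~ P 1 by case: Pm => _ [].
have [w [hw [nt [_ hR2]]]] := locR_unit_scale hN Pm hu (uf_neq0 i).
apply: (colon_sum_loc_of_unit (uf_colon (i := i) hw _)) => // x Jx.
case: hw => [[k ->]|[k ->]].
  have -> : uf i * p%:F ^+ k * x = (p ^+ k)%:F * (uf i * x) by rewrite tofracXn; ring.
  by apply: loc_of_mem => //; apply: frac_submodZ (ufJ i Jx).
have [s [ns Js]] : loc P J (q ^+ k * x).
  elim: k => [|k [s [ns Js]]]; first by rewrite expr0 mul1r; apply: loc_of_mem.
  have [s' [ns' Js']] := qJ _ Js.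
  exists (s' * s); split; first exact: prime_notin_mul.
  by rewrite tofracM exprS; congr J: Js'; ring.
by exists s; split => //; congr (Jf i): (ufJ i Js); ring.
Qed.

(* Otherwise J_P = y R_P for some y in some Jf i. *)
Lemma colon_sum_loc_unstable : ~ (forall j, J j -> loc P J (q * j)) -> loc P (sum_mod T) 1.
Proof.
move=> nqJ; have Ppr := maximal_ideal_prime Pm; have nP1 : ~ P 1 by case: Pm => _ [].
have [j [Jj nj]] : exists j, J j /\ ~ loc P J (q * j).
  by apply: NNPP => h; apply: nqJ => j Jj; apply: NNPP => h'; apply: h; exists j.
have [l [hl ej]] := J_gen Jj.
have [[i y] [inl nqy]] : exists pr, List.In pr l /\ ~ loc P J (q * pr.2).
  apply: NNPP => h; apply: nj; rewrite ej mulr_sumr.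
  apply: frac_submod_sum (frac_submod_loc Ppr JK) _ => pr inpr.
  by apply: NNPP => h'; apply: h; exists pr.
have Jfy : Jf i y := hl _ inl.
have ny : y != 0.
  apply/eqP => y0; apply: nqy; rewrite y0 mulr0.
  by apply: loc_of_mem => //; apply: frac_submod0.
have J_loc x : J x -> loc P (Jf i) x.
  move=> Jx; case: (eqVneq x 0) => [->|nx]; first by apply: loc_of_mem => //; apply: frac_submod0.
  have [s [ns [r er]]] := locR_ratio hN Pm hu JK Jx nx ny nqy.
  exists s; split => //.
  have -> : s%:F * x = r%:F * y by rewrite -er -mulrA divfK.
  exact: frac_submodZ.
have [w [hw [nt [hR1 hR2]]]] := locR_unit_scale hN Pm hu (uf_neq0 i).
apply: (colon_sum_loc_of_unit (uf_colon (i := i) hw _)) => // x Jx.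
exact: loc_mul Ppr (JfK i) hR1 (J_loc x Jx).
Qed.

End AtUniformizer.

End ColonSum.

Lemma colon_sum_one R (hR : dedekind R) (J : {fraction R} -> Prop) (I : Type)
    (Jf : I -> {fraction R} -> Prop) (uf : I -> {fraction R}) :
  frac_submod J -> (exists j, J j /\ j != 0) -> (forall i, frac_submod (Jf i)) ->
  (forall x, J x -> exists l : seq (I * {fraction R}),
     (forall pr, List.In pr l -> Jf pr.1 pr.2) /\ x = \sum_(pr <- l) pr.2) ->
  (forall i, uf i != 0) -> (forall i x, J x -> Jf i (uf i * x)) ->
  sum_mod (fun t => exists i, colon (Jf i) J t) 1.
Proof.
move=> JK [j0 [Jj0 nj0]] JfK J_gen uf_neq0 ufJ.
have hN : noetherian_dom R by case: hR.
have [i0 _] : exists i0 : I, True.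
  have [[|pr l] [_ e]] := J_gen j0 Jj0; last by exists pr.1.
  by move: nj0; rewrite e big_nil eqxx.
apply: (mem_of_loc hN (sum_mod_submod _)) => [r t [i ht]|P Pm].
  by exists i; apply: colon_scale_closed.
case: (classic (exists x, P x /\ x != 0)) => [Pnz|Pz]; last first.
  exact (colon_sum_loc_zero JfK uf_neq0 ufJ i0 Pz).
have [p [q [z hu]]] := maximal_ideal_invertible hR Pm Pnz.
case: (classic (forall j, J j -> loc P J (q * j))) => [qJ|nqJ].
  exact (colon_sum_loc_stable hN JfK uf_neq0 ufJ Pm hu i0 qJ).
exact (colon_sum_loc_unstable hN JK JfK J_gen uf_neq0 ufJ Pm hu nqJ).
Qed.

Section Submodules.
Variable R : idomainType.
Local Notation K := {fraction R}.
Local Notation "x %:F" := (@tofrac R x).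

Lemma submod0 n (A : vset R n) : submod A -> A 0. Proof. by case. Qed.
Lemma submodD n (A : vset R n) x y : submod A -> A x -> A y -> A (x + y).
Proof. by case=> _ [H _]; apply: H. Qed.
Lemma submodZ n (A : vset R n) r x : submod A -> A x -> A (r%:F *: x).
Proof. by case=> _ [_ H]; apply: H. Qed.
Lemma submodN n (A : vset R n) x : submod A -> A x -> A (- x).
Proof. by move=> AS Ax; rewrite -scaleN1r -tofrac1 -tofracN; apply: submodZ. Qed.
Lemma submodB n (A : vset R n) x y : submod A -> A x -> A y -> A (x - y).
Proof. by move=> AS Ax Ay; apply: submodD => //; apply: submodN. Qed.

Lemma submod_sum n (A : vset R n) (I : eqType) (l : seq I) (F : I -> 'rV[K]_n) :
  submod A -> (forall i, i \in l -> A (F i)) -> A (\sum_(i <- l) F i).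
Proof.
by move=> AS H; rewrite big_seq; apply: big_ind => // [|x y]; [apply: submod0 | apply: submodD].
Qed.

Lemma smul1 n (x : 'rV[K]_n) : smul 1 x = x.
Proof. by rewrite /smul tofrac1 scale1r. Qed.

Definition linear_on n (V : lmodType K) (A : vset R n) (f : 'rV[K]_n -> V) :=
  (forall x y, A x -> A y -> f (x + y) = f x + f y) /\
  (forall r x, A x -> f (smul r x) = r%:F *: f x).

Lemma hom_linear_on n m (A : vset R n) (C : vset R m) f : hom A C f -> linear_on A f.
Proof. by case. Qed.

Section LinearOn.
Variables (n : nat) (V : lmodType K) (A : vset R n) (f : 'rV[K]_n -> V).
Hypotheses (AS : submod A) (fL : linear_on A f).

Lemma linear_on0 : f 0 = 0.
Proof.
have := fL.1 0 0 (submod0 AS) (submod0 AS); rewrite addr0 => /eqP.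
by rewrite eq_sym -subr_eq0 addrK => /eqP.
Qed.

Lemma linear_onB x y : A x -> A y -> f (x - y) = f x - f y.
Proof.
move=> Ax Ay; have := fL.1 (x - y) y (submodB AS Ax Ay) Ay.
by rewrite subrK => ->; rewrite addrK.
Qed.

Lemma linear_onZ x (t : K) : A x -> A (t *: x) -> f (t *: x) = t *: f x.
Proof.
move=> Ax Atx; have [a [b [nb eab]]] := tofrac_quot t.
have nbF : b%:F != 0 by rewrite tofrac_eq0.
have e1 : smul b (t *: x) = smul a x by rewrite /smul scalerA eab mulrC divfK.
have := congr1 f e1; rewrite !fL.2 // => e2.
by apply: (scalerI nbF); rewrite e2 scalerA eab mulrC divfK.
Qed.

Lemma linear_on_sum (I : eqType) (l : seq I) (F : I -> 'rV[K]_n) :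
  (forall i, i \in l -> A (F i)) -> f (\sum_(i <- l) F i) = \sum_(i <- l) f (F i).
Proof.
elim: l => [|i l IH] H; first by rewrite !big_nil linear_on0.
have Hl j : j \in l -> A (F j) by move=> h; apply: H; rewrite inE h orbT.
rewrite !big_cons fL.1 ?IH //; first by apply: H; rewrite inE eqxx.
exact: submod_sum.
Qed.

End LinearOn.

Lemma linear_form_scale n (A : vset R n) (phi : 'rV[K]_n -> K) x (t : K) :
  linear_on (V := K^o) A phi -> A x -> A (t *: x) -> phi (t *: x) = t * phi x.
Proof. by move=> phiL Ax Atx; exact (linear_onZ phiL Ax Atx). Qed.

(* [coefs A v] is isomorphic to the pure hull of v in A. *)
Definition coefs n (A : vset R n) (v : 'rV[K]_n) : K -> Prop := fun t => A (t *: v).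

Lemma frac_submod_coefs n (A : vset R n) v : submod A -> frac_submod (coefs A v).
Proof.
move=> AS; split; first by rewrite /coefs scale0r; apply: submod0.
split; first by move=> x y hx hy; rewrite /coefs scalerDl; apply: submodD.
by move=> r x hx; rewrite /coefs -scalerA; apply: submodZ.
Qed.

Definition qle (D E : K -> Prop) := exists u, u != 0 /\ forall t, D t -> E (u * t).

Lemma qle_trans D E F : qle D E -> qle E F -> qle D F.
Proof.
move=> [u [nu hu]] [u' [nu' hu']]; exists (u' * u); split; first by rewrite mulf_neq0.
by move=> t Dt; rewrite -mulrA; apply: hu'; apply: hu.
Qed.

Lemma sub_qle (D E : K -> Prop) : (forall t, D t -> E t) -> qle D E.
Proof. by move=> h; exists 1; split; [exact: oner_neq0 | move=> t /h; rewrite mul1r]. Qed.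

Lemma qle_tofrac (D E : K -> Prop) : frac_submod E -> qle D E ->
  exists a : R, a != 0 /\ forall t, D t -> E (a%:F * t).
Proof.
move=> EK [u [nu hu]]; have [a [b [nb eab]]] := tofrac_quot u.
have na : a != 0 by apply: contraNneq nu => a0; rewrite eab a0 tofrac0 mul0r.
exists a; split => // t Dt; have := frac_submodZ b EK (hu t Dt).
by rewrite eab mulrA [b%:F * _]mulrC divfK // tofrac_eq0.
Qed.

Definition line m (B : vset R m) b0 :=
  B b0 /\ b0 != 0 /\ forall b, B b -> exists c, b = c *: b0.

Lemma rank1_line m (B : vset R m) b0 : submod B -> line B b0 -> rank1 B.
Proof. by move=> BS [h1 [h2 h3]]; split => //; exists b0; split. Qed.

Lemma rank1_exists_line m (B : vset R m) : rank1 B -> submod B /\ exists b0, line B b0.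
Proof. by move=> [BS [b0 [h1 h2 h3]]]; split => //; exists b0. Qed.

Lemma scalerIv n (c c' : K) (v : 'rV[K]_n) : v != 0 -> c *: v = c' *: v -> c = c'.
Proof.
move=> nv /eqP; rewrite -subr_eq0 -scalerBl scaler_eq0 (negbTE nv) orbF subr_eq0.
by move/eqP.
Qed.

Lemma row_neq0_coord n (v : 'rV[K]_n) : v != 0 -> exists i, v 0 i != 0.
Proof.
move=> nv; apply: NNPP => h; apply: (negP nv); apply/eqP/rowP => i; rewrite mxE.
by apply/eqP; apply: NNPP => h'; apply: h; exists i; apply/negP.
Qed.

Lemma type_le_qle n m (B : vset R n) (C : vset R m) b0 c0 : submod B -> submod C ->
  line B b0 -> line C c0 -> type_le B C -> qle (coefs B b0) (coefs C c0).
Proof.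
move=> BS CS [Bb0 [nb0 lb]] [Cc0 [nc0 lc]] [f [hf finj]]; have [_ _ fC] := hf.
have [c ec] := lc _ (fC _ Bb0).
have nc : c != 0.
  apply: contraNneq nb0 => ec0; apply/eqP; apply: (finj b0 0 Bb0 (submod0 BS)).
  by rewrite ec ec0 scale0r (linear_on0 BS (hom_linear_on hf)).
exists c; split => // t Bt; rewrite /coefs mulrC -scalerA -ec.
by rewrite -(linear_onZ (hom_linear_on hf) Bb0 Bt); apply: fC.
Qed.

Lemma qle_type_le n m (B : vset R n) (C : vset R m) b0 c0 :
  line B b0 -> line C c0 -> qle (coefs B b0) (coefs C c0) -> type_le B C.
Proof.
move=> [Bb0 [nb0 lb]] [Cc0 [nc0 lc]] [u [nu hu]].
have [i ni] := row_neq0_coord nb0.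
pose cf (x : 'rV[K]_n) := x 0 i / b0 0 i.
have cfE c : cf (c *: b0) = c by rewrite /cf mxE mulfK.
exists (fun x => (cf x * u) *: c0); split.
  split.
  - by move=> x y _ _; rewrite /cf mxE mulrDl mulrDl scalerDl.
  - by move=> r x _; rewrite /smul /cf mxE scalerA !mulrA.
  - move=> x Bx; have [c ex] := lb _ Bx; rewrite ex cfE mulrC; apply: hu.
    by rewrite /coefs -ex.
move=> x y Bx By; have [c ->] := lb _ Bx; have [c' ->] := lb _ By.
by rewrite !cfE => /(scalerIv nc0) /(mulIf nu) ->.
Qed.

Definition hull n (A : vset R n) a : vset R n := fun x => A x /\ exists t, x = t *: a.

Lemma hull_submod n (A : vset R n) a : submod A -> submod (hull A a).
Proof.
move=> AS; split; first by split; [apply: submod0 | exists 0; rewrite scale0r].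
split.
  move=> x y [Ax [t ex]] [Ay [t' ey]]; split; first exact: (submodD AS Ax Ay).
  by exists (t + t'); rewrite ex ey scalerDl.
move=> r x [Ax [t ex]]; split; first exact: (submodZ r AS Ax).
by exists (r%:F * t); rewrite /smul ex scalerA.
Qed.

Lemma hull_pure n (A : vset R n) a : submod A -> pure_in (hull A a) A.
Proof.
move=> AS; split; first by split; [apply: hull_submod | move=> x []].
move=> r x Ax [_ [t et]]; case: (eqVneq r 0) => [->|nr].
  exists 0; split; first by split; [apply: submod0 | exists 0; rewrite scale0r].
  by rewrite /smul tofrac0 !scale0r.
have nrF : r%:F != 0 by rewrite tofrac_eq0.
exists x; split => //; split => //; exists (t / r%:F).
by move: et; rewrite /smul => et; rewrite -[x](scalerK nrF) et scalerA mulrC.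
Qed.

Lemma pure_in_scale n (A P : vset R n) y t : pure_in P A -> P y -> A (t *: y) -> P (t *: y).
Proof.
move=> [[PS PA] Pp] Py Aty; have [a [b [nb eab]]] := tofrac_quot t.
have nbF : b%:F != 0 by rewrite tofrac_eq0.
have : P (smul b (t *: y)) by rewrite /smul scalerA eab mulrC divfK //; apply: submodZ.
by move=> /(Pp b _ Aty) [b' [Pb' /(scalerI nbF) ->]].
Qed.

Lemma elem_hullE n (A : vset R n) a : submod A -> A a -> elem_hull A a = hull A a.
Proof.
move=> AS Aa; apply: functional_extensionality => x; apply: propositional_extensionality.
split; first by apply; [apply: hull_pure | move=> y ->; split => //; exists 1; rewrite scale1r].
move=> [Ax [t ex]] P Ppure sub; rewrite ex.
by apply: (pure_in_scale Ppure (sub a erefl)); rewrite -ex.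
Qed.

Lemma hull_line n (A : vset R n) a : A a -> a != 0 -> line (hull A a) a.
Proof.
move=> Aa na; split; first by split => //; exists 1; rewrite scale1r.
by split => // b [_ [t ->]]; exists t.
Qed.

Lemma coefs_hull n (A : vset R n) a t : coefs (hull A a) a t <-> coefs A a t.
Proof. by split; [case | move=> h; split => //; exists t]. Qed.

End Submodules.

Section Generation.
Variable R : idomainType.
Local Notation K := {fraction R}.
Local Notation "x %:F" := (@tofrac R x).

Lemma generated_by_homs n m (A : vset R n) (P : vset R m) :
  (forall y, P y -> exists s : seq (('rV[K]_n -> 'rV[K]_m) * 'rV[K]_n),
     (forall pr, List.In pr s -> hom A P pr.1 /\ A pr.2) /\
     y = \sum_(pr <- s) pr.1 pr.2) ->
  generated_by A P.
Proof.
move=> H; exists {f : 'rV[K]_n -> 'rV[K]_m | hom A P f}, (fun i => sval i).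
split; first by move=> [f hf].
move=> y Py; have [s [hs ->]] := H y Py.
elim: s hs => [|pr s IH] hs; first by exists [::]; split; [constructor | rewrite !big_nil].
have [h1 h2] := hs pr (or_introl erefl).
have [s' [fs' es']] := IH (fun pr' h => hs pr' (or_intror h)).
by exists ((exist _ pr.1 h1, pr.2) :: s'); split; [constructor | rewrite !big_cons es'].
Qed.

Lemma generated_by_hom_neq0 n m (A : vset R n) (P : vset R m) y :
  generated_by A P -> P y -> y != 0 -> exists f a, [/\ hom A P f, A a & f a != 0].
Proof.
move=> [I [f [hf H]]] Py ny; have [s [fs ey]] := H y Py.
apply: NNPP => h; move/negP: ny; apply; apply/eqP; rewrite ey.
elim: s fs {ey} => [|pr s IH] fs; first by rewrite big_nil.
case/List.Forall_cons_iff: fs => h1 h2; rewrite big_cons IH // addr0.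
by apply/eqP; apply: NNPP => h'; apply: h; exists (f pr.1), pr.2; split => //; apply/negP.
Qed.

Definition inner_type_elem n (A : vset R n) b :=
  [/\ A b, b != 0 & forall a, A a -> a != 0 -> qle (coefs A b) (coefs A a)].

Definition line_projection n (A : vset R n) b (phi : 'rV[K]_n -> K) r :=
  [/\ linear_on (V := K^o) A phi, forall x, A x -> A (phi x *: b), phi b = r%:F & r != 0].

Lemma type_is_IT_qle n m (A : vset R n) (B : vset R m) b0 : submod A -> submod B ->
  line B b0 -> type_is_IT A B -> forall a, A a -> a != 0 -> qle (coefs B b0) (coefs A a).
Proof.
move=> AS BS lB [_ Hle _] a Aa na.
have hB : type_le B (hull A a) by rewrite -(elem_hullE AS Aa); apply: Hle.
apply: qle_trans (type_le_qle BS (hull_submod a AS) lB (hull_line Aa na) hB) _.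
by apply: sub_qle => t /coefs_hull.
Qed.

Lemma quasi_iso_line n m (B' : vset R n) (B : vset R m) b0 : submod B' -> submod B ->
  line B b0 -> quasi_iso B' B -> exists b, line B' b /\ qle (coefs B' b) (coefs B b0).
Proof.
move=> B'S BS [Bb0 [nb0 lb]] [f [g [r1 [s1 [[hf hg nr1 ns1] [gf fg]]]]]].
have [_ _ gB] := hg; have [_ _ fB] := hf.
exists (g b0); have B'b := gB _ Bb0.
have nb : g b0 != 0.
  apply/eqP => gb0; move: (fg _ Bb0); rewrite gb0 (linear_on0 B'S (hom_linear_on hf)) /smul.
  by move/esym/eqP; rewrite scaler_eq0 tofrac_eq0 (negbTE ns1) (negbTE nb0).
have nr1F : r1%:F != 0 by rewrite tofrac_eq0.
split.
  split => //; split => // x B'x; have [c ec] := lb _ (fB _ B'x).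
  have Bc : B (c *: b0) by rewrite -ec; apply: fB.
  exists (c / r1%:F); move: (gf _ B'x); rewrite ec (linear_onZ (hom_linear_on hg) Bb0 Bc) /smul.
  by move=> e; rewrite -[x](scalerK nr1F) -e scalerA mulrC.
exists s1%:F; split; first by rewrite tofrac_eq0.
move=> t Bt; rewrite /coefs mulrC -scalerA -/(smul s1 b0) -fg //.
by rewrite -(linear_onZ (hom_linear_on hf) B'b Bt); apply: fB.
Qed.

Lemma line_summand_projection n (A B' C : vset R n) b r : submod A -> submod B' ->
  submod C -> line B' b -> (forall x, B' x -> A x) -> indep B' C -> r != 0 ->
  (forall a, A a -> sum_set B' C (smul r a)) ->
  exists phi, line_projection A b phi r /\ qle (coefs A b) (coefs B' b).
Proof.
move=> AS B'S CS [B'b [nb lB']] B'A ind nr rS.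
have /ClassicalEpsilon.choice [phi hphi] : forall a, exists t : K, A a ->
    B' (t *: b) /\ exists c, C c /\ smul r a = t *: b + c.
  move=> a; case: (classic (A a)) => [Aa|nAa]; last by exists 0.
  have [x [c [B'x Cc e]]] := rS a Aa; have [t et] := lB' x B'x.
  by exists t => _; split; [rewrite -et | exists c; split => //; rewrite e et].
have uniq t t' c c' : B' (t *: b) -> B' (t' *: b) -> C c -> C c' ->
    t *: b + c = t' *: b + c' -> t = t'.
  move=> h1 h2 h3 h4 e; apply: (scalerIv nb); apply/eqP; rewrite -subr_eq0 -scalerBl.
  have e' : t *: b - t' *: b = c' - c.
    by apply/eqP; rewrite subr_eq addrAC [c' + _]addrC -e addrK.
  by rewrite scalerBl; apply/eqP; apply: ind (submodB B'S h1 h2) _; rewrite e'; apply: submodB.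
have phiL : linear_on (V := K^o) A phi.
  split.
    move=> x y Ax Ay; have [h1 [c1 [C1 e1]]] := hphi x Ax.
    have [h2 [c2 [C2 e2]]] := hphi y Ay; have [h3 [c3 [C3 e3]]] := hphi _ (submodD AS Ax Ay).
    apply: (uniq _ _ c3 (c1 + c2)) => //; first by rewrite scalerDl; apply: submodD.
      exact: submodD.
    by rewrite -e3 scalerDl addrACA -e1 -e2 /smul scalerDr.
  move=> s x Ax; have [h1 [c1 [C1 e1]]] := hphi x Ax.
  have [h3 [c3 [C3 e3]]] := hphi _ (submodZ s AS Ax).
  apply: (uniq _ _ c3 (s%:F *: c1)) => //; first by rewrite -scalerA; apply: submodZ.
    exact: submodZ.
  by rewrite -e3 -scalerA -scalerDr -e1 /smul !scalerA mulrC.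
have Ab := B'A _ B'b.
have phib : phi b = r%:F.
  have [h1 [c1 [C1 e1]]] := hphi b Ab.
  apply: (uniq _ _ c1 0) => //; [exact: submodZ | exact: submod0 | by rewrite -e1 addr0].
exists phi; split; first by split => // x Ax; apply: B'A; case: (hphi x Ax).
exists r%:F; split; first by rewrite tofrac_eq0.
move=> t At; have := (hphi _ At).1.
by rewrite (linear_form_scale phiL Ab At) phib /coefs mulrC.
Qed.

Lemma quasi_summand_IT_projection n m (A : vset R n) (B : vset R m) : submod A -> rank1 B ->
  quasi_summand A B -> type_is_IT A B ->
  exists b phi r, inner_type_elem A b /\ line_projection A b phi r.
Proof.
move=> AS /rank1_exists_line [BS [b0 lB]]
  [B' [C [[B'S B'A] [CS CA] ind [_ [r [s [nr ns rS sA]]]] iso]]] IT.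
have [b [lB' qB']] := quasi_iso_line B'S BS lB iso.
have [phi [hphi qA]] := line_summand_projection AS B'S CS lB' B'A ind nr rS.
exists b, phi, r; split => //; split; [exact: B'A lB'.1 | exact: lB'.2.1 |].
move=> a Aa na; apply: qle_trans qA (qle_trans qB' _).
exact: type_is_IT_qle AS BS lB IT a Aa na.
Qed.

Lemma type_is_IT_hull n (A : vset R n) z : submod A -> inner_type_elem A z ->
  type_is_IT A (hull A z).
Proof.
move=> AS [Az nz ITz]; have lz := hull_line Az nz.
split; first exact: rank1_line (hull_submod z AS) lz.
  move=> a Aa na; rewrite (elem_hullE AS Aa).
  apply: (qle_type_le lz (hull_line Aa na)).
  apply: qle_trans (sub_qle (fun t => (coefs_hull A z t).1)) _.
  by apply: qle_trans (ITz a Aa na) (sub_qle (fun t => (coefs_hull A a t).2)).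
by move=> m C _ hC; rewrite -(elem_hullE AS Az); apply: hC.
Qed.

End Generation.

Section Projection.
Variable R : idomainType.
Local Notation K := {fraction R}.
Local Notation "x %:F" := (@tofrac R x).
Variables (n : nat) (A : vset R n) (b : 'rV[K]_n) (phi : 'rV[K]_n -> K) (r : R).
Hypotheses (AS : submod A) (ITb : inner_type_elem A b) (hphi : line_projection A b phi r).

Let phiL : linear_on (V := K^o) A phi. Proof. by case: hphi. Qed.
Let phi0 : phi 0 = 0. Proof. exact: (linear_on0 AS phiL). Qed.
Let phiD x y : A x -> A y -> phi (x + y) = phi x + phi y. Proof. exact: phiL.1. Qed.
Let phiZ s x : A x -> phi (s%:F *: x) = s%:F * phi x. Proof. exact: phiL.2. Qed.
Let Ab : A b. Proof. by case: ITb. Qed.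
Let phiA x : A x -> A (phi x *: b). Proof. by case: hphi => _ + _ _; apply. Qed.

Definition image_form (t : K) := exists a, A a /\ t = phi a.

Lemma frac_submod_image_form : frac_submod image_form.
Proof.
split; first by exists 0; split; [apply: submod0 | rewrite phi0].
split.
  by move=> x y [a [Aa ->]] [c [Ac ->]]; exists (a + c); split; [apply: submodD | rewrite phiD].
by move=> s x [a [Aa ->]]; exists (s%:F *: a); split; [apply: submodZ | rewrite phiZ].
Qed.

Lemma image_form_neq0 : exists t, image_form t /\ t != 0.
Proof. by case: hphi => _ _ phib nr; exists r%:F; split; [exists b | rewrite tofrac_eq0]. Qed.

Lemma image_form_qle y : A y -> y != 0 -> qle image_form (coefs A y).
Proof.
move=> Ay ny; case: ITb => _ _ /(_ y Ay ny) q; apply: qle_trans q.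
by apply: sub_qle => t [a [Aa ->]]; apply: phiA.
Qed.

(* For y in P write 1 = sum t_i phi(a_i) with t_i phi(A) y in A: then y is the sum of
   the images of the a_i under the homomorphisms x |-> t_i phi(x) y into P. *)
Lemma self_pure_generator_of_projection (hR : dedekind R) : self_pure_generator A.
Proof.
move=> P Pp; apply: generated_by_homs => y Py.
have PA : forall x, P x -> A x by case: Pp => [[_ h] _].
case: (eqVneq y 0) => [->|ny]; first by exists [::]; split => //; rewrite big_nil.
have [u [nu hu]] := image_form_qle (PA y Py) ny.
have E1 : coefs A y 1 by rewrite /coefs scale1r; apply: PA.
have [l [hl e1]] := colon_prod_cover hR frac_submod_image_form (frac_submod_coefs y AS)
  image_form_neq0 nu hu E1.
suff [s [hs es]] : exists s : seq (('rV[K]_n -> 'rV[K]_n) * 'rV[K]_n),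
    (forall pr, List.In pr s -> hom A P pr.1 /\ A pr.2) /\
    (\sum_(pr <- l) pr.1 * pr.2) *: y = \sum_(pr <- s) pr.1 pr.2.
  by exists s; rewrite -[LHS]scale1r e1.
elim: l hl {e1} => [|[t d] l IH] hl.
  by exists [::]; split => //; rewrite !big_nil scale0r.
have [/= ht [a [Aa ed]]] := hl _ (or_introl erefl).
have [s [hs es]] := IH (fun pr' h => hl pr' (or_intror h)).
exists ((fun x => (t * phi x) *: y, a) :: s); split; last by rewrite !big_cons scalerDl es ed.
move=> pr' [<-|]; last exact: hs.
split => //=; split.
- by move=> x z Ax Az; rewrite phiD // mulrDr scalerDl.
- by move=> s' x Ax; rewrite phiZ // /smul scalerA mulrCA.
- by move=> x Ax; apply: (pure_in_scale Pp Py); apply: ht; exists x.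
Qed.

Let phi_scale x (t : K) : A x -> A (t *: x) -> phi (t *: x) = t * phi x.
Proof. exact: linear_form_scale phiL. Qed.

Let index := {a : 'rV[K]_n | A a /\ phi a != 0}.

Definition form_coefs (i : index) (t : K) := exists e, coefs A (sval i) e /\ t = e * phi (sval i).

Lemma frac_submod_form_coefs i : frac_submod (form_coefs i).
Proof.
have CK := frac_submod_coefs (sval i) AS.
split; first by exists 0; split; [apply: frac_submod0 | rewrite mul0r].
split.
  move=> x y [e [he ->]] [e' [he' ->]]; exists (e + e').
  by split; [apply: frac_submodD | rewrite mulrDl].
by move=> s x [e [he ->]]; exists (s%:F * e); split; [apply: frac_submodZ | rewrite mulrA].
Qed.

Lemma image_form_gen x : image_form x -> exists l : seq (index * K),
  (forall pr, List.In pr l -> form_coefs pr.1 pr.2) /\ x = \sum_(pr <- l) pr.2.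
Proof.
move=> [a [Aa ->]]; case: (eqVneq (phi a) 0) => [->|na]; first by exists [::]; rewrite big_nil.
exists [:: (exist _ a (conj Aa na), phi a)]; split; last by rewrite big_seq1.
by move=> pr [<-|[]] /=; exists 1; split; [rewrite /coefs scale1r | rewrite mul1r].
Qed.

Lemma image_form_qle_form_coefs i : qle image_form (form_coefs i).
Proof.
case: i => a [Aa na] /=; have nza : a != 0 by apply: contraNneq na => ->; rewrite phi0.
have [u0 [nu0 hu0]] := image_form_qle Aa nza.
exists (u0 * phi a); split; first by rewrite mulf_neq0.
by move=> x /hu0 hx; exists (u0 * x); split => //=; rewrite mulrAC.
Qed.

(* phi(A) is the sum of the modules phi(a) coefs(a), all of the type of phi(A); over a
   Dedekind domain their colons by phi(A) therefore sum to R. *)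
Lemma projection_unit_sum (hR : dedekind R) : exists cs : seq (K * 'rV[K]_n),
  (forall pr, pr \in cs -> A pr.2 /\ forall x, A x -> A ((phi x * pr.1) *: pr.2)) /\
  \sum_(pr <- cs) pr.1 * phi pr.2 = 1.
Proof.
have /ClassicalEpsilon.choice [uf huf] := image_form_qle_form_coefs.
have [l [hl ->]] := colon_sum_one hR frac_submod_image_form image_form_neq0
  frac_submod_form_coefs image_form_gen (fun i => (huf i).1) (fun i => (huf i).2).
elim: l hl => [|t l IH] hl; first by exists [::]; rewrite !big_nil.
have [[a [Aa na]] ht] := hl t (or_introl erefl).
have [cs [hcs ecs]] := IH (fun t' h => hl t' (or_intror h)).
exists ((t / phi a, a) :: cs); rewrite !big_cons ecs /= divfK //.
split => // pr; rewrite inE => /orP [/eqP -> /=|]; last exact: hcs.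
split => // x Ax; have [e [he ee]] := ht (phi x) (ex_intro _ x (conj Ax erefl)).
by rewrite mulrA [phi x * t]mulrC ee /= mulfK.
Qed.

Lemma split_elem_of_projection (hR : dedekind R) : exists w, forall x, A x ->
  A (phi x *: w) /\ phi (phi x *: w) = phi x.
Proof.
have [cs [hcs ecs]] := projection_unit_sum hR.
exists (\sum_(pr <- cs) pr.1 *: pr.2) => x Ax.
have Aterm pr : pr \in cs -> A ((phi x * pr.1) *: pr.2) by move=> /hcs [_]; apply.
have -> : phi x *: \sum_(pr <- cs) pr.1 *: pr.2 = \sum_(pr <- cs) (phi x * pr.1) *: pr.2.
  by rewrite scaler_sumr; apply: eq_bigr => pr _; rewrite scalerA.
split; first exact: submod_sum.
rewrite (linear_on_sum AS phiL Aterm) -[in RHS](mulr1 (phi x)) -ecs mulr_sumr.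
rewrite big_seq [RHS]big_seq; apply: eq_bigr => pr /[dup] /hcs [Aa _] /Aterm Apr.
by rewrite phi_scale // mulrA.
Qed.

Lemma direct_summand_of_split w : (forall x, A x -> A (phi x *: w) /\ phi (phi x *: w) = phi x) ->
  exists B, [/\ rank1 B, direct_summand A B & type_is_IT A B].
Proof.
move=> split_w; have P1 x Ax := (split_w x Ax).1; have P2 x Ax := (split_w x Ax).2.
case: hphi => _ _ phib nr; have nrF : r%:F != 0 by rewrite tofrac_eq0.
have Arw : A (r%:F *: w) by rewrite -phib; apply: P1.
have phi_w t : A (t *: w) -> phi (t *: w) = t.
  move=> Atw; have e : t *: w = (t / r%:F) *: (r%:F *: w) by rewrite scalerA divfK.
  by rewrite e phi_scale // -?e // -phib P2 // phib divfK.
have nrw : r%:F *: w != 0 by apply: contraNneq nrF => e; rewrite -(phi_w _ Arw) e phi0.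
have ITrw : inner_type_elem A (r%:F *: w).
  split => // a Aa na; case: ITb => _ _ /(_ a Aa na); apply: qle_trans.
  exists r%:F; split => // t; rewrite /coefs scalerA => Atw.
  by have := phiA Atw; rewrite phi_w // mulrC.
exists (hull A (r%:F *: w)); split.
- exact: rank1_line (hull_submod _ AS) (hull_line Arw nrw).
- split; first by split; [apply: hull_submod | move=> x []].
  exists (fun x => A x /\ phi x = 0); split.
  + split; last by move=> x [].
    split; first by split; [apply: submod0 | apply: phi0].
    split.
      by move=> x y [Ax px] [Ay py]; split; [apply: submodD | rewrite phiD // px py addr0].
    by move=> s x [Ax px]; split; [apply: submodZ | rewrite /smul phiZ // px mulr0].
  + move=> x [Ax [t ex]] [_]; subst x; rewrite scalerA phi_w -?scalerA //.
    by move/eqP; rewrite mulf_eq0 (negbTE nrF) orbF => /eqP ->; rewrite scale0r.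
  + move=> a; split => [Aa|[x [c [[Ax _] [Ac _] ->]]]]; last exact: submodD.
    exists (phi a *: w), (a - phi a *: w); split; last by rewrite addrC subrK.
      by split; [apply: P1 | exists (phi a / r%:F); rewrite scalerA divfK].
    split; first by apply: submodB => //; apply: P1.
    by rewrite (linear_onB AS phiL Aa (P1 a Aa)) P2 // subrr.
- exact: type_is_IT_hull.
Qed.

End Projection.

Section Implications.
Variable R : idomainType.
Local Notation K := {fraction R}.
Local Notation "x %:F" := (@tofrac R x).

Lemma quasi_iso_refl n (B : vset R n) : quasi_iso B B.
Proof.
have hid : hom B B id by split => *.
exists id, id, 1, 1; split; first by split => //; exact: oner_neq0.
by split => x _; rewrite smul1.
Qed.

Lemma quasi_equal_sum_set n (A B C : vset R n) (r : R) : submod A ->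
  (forall x, B x -> A x) -> (forall x, C x -> A x) -> r != 0 ->
  (forall a, A a -> sum_set B C (smul r a)) -> quasi_equal (sum_set B C) A.
Proof.
move=> AS BA CA nr rS; have nrF : r%:F != 0 by rewrite tofrac_eq0.
have sumA x : sum_set B C x -> A x by move=> [b [c [/BA Ab /CA Ac ->]]]; apply: submodD.
split; last by exists r, 1; split => //; [exact: oner_neq0 | move=> x /sumA; rewrite smul1].
move=> x; split => [[c [a [/sumA Aa ->]]]|[c [a [Aa ->]]]]; first by exists c, a.
exists (c / r%:F), (smul r a); split; first exact: rS.
by rewrite /smul scalerA divfK.
Qed.

Lemma direct_summand_quasi_summand n (A B : vset R n) : submod A ->
  direct_summand A B -> quasi_summand A B.
Proof.
move=> AS [[BS BA] [C [[CS CA] ind hA]]]; exists B, C; split => //; last exact: quasi_iso_refl.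
by apply: (quasi_equal_sum_set AS BA CA (oner_neq0 R)) => a /hA; rewrite smul1.
Qed.

Lemma quasi_summand_IT_direct (hR : dedekind R) n m (A : vset R n) (B : vset R m) :
  submod A -> rank1 B -> quasi_summand A B -> type_is_IT A B ->
  exists B' : vset R n, [/\ rank1 B', direct_summand A B' & type_is_IT A B'].
Proof.
move=> AS B1 qsB IT; have [b [phi [r [ITb hphi]]]] := quasi_summand_IT_projection AS B1 qsB IT.
have [w split_w] := split_elem_of_projection AS ITb hphi hR.
exact (direct_summand_of_split AS ITb hphi split_w).
Qed.

Lemma quasi_summand_IT_self_pure_generator (hR : dedekind R) n m (A : vset R n)
    (B : vset R m) : submod A -> rank1 B -> quasi_summand A B -> type_is_IT A B ->
  self_pure_generator A.
Proof.
move=> AS B1 qsB IT; have [b [phi [r [ITb hphi]]]] := quasi_summand_IT_projection AS B1 qsB IT.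
exact (self_pure_generator_of_projection AS ITb hphi hR).
Qed.

End Implications.

Section InnerTypeElement.
Variable R : idomainType.
Local Notation K := {fraction R}.
Local Notation "x %:F" := (@tofrac R x).

Lemma hom_hull_qle n (A : vset R n) x y f : hom A (hull A x) f -> A y -> f y != 0 ->
  qle (coefs A y) (coefs A x).
Proof.
move=> hf Ay nfy; have [_ _ fH] := hf; have [_ [c ec]] := fH _ Ay.
exists c; split; first by apply: contraNneq nfy => c0; rewrite ec c0 scale0r.
move=> t At; have [+ _] := fH _ At.
by rewrite (linear_onZ (hom_linear_on hf) Ay At) ec scalerA /coefs mulrC.
Qed.

Lemma span_qle n (A : vset R n) z (xs : seq 'rV[K]_n) : submod A ->
  (forall x, x \in xs -> qle (coefs A z) (coefs A x)) ->
  forall a, a \in <<xs>>%VS -> qle (coefs A z) (coefs A a).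
Proof.
move=> AS H a ha; have CK := frac_submod_coefs z AS.
pose S v := exists u : R, u != 0 /\ forall t, coefs A z t -> A ((u%:F * t) *: v).
suff [u [nu hu]] : S a by exists u%:F; split; [rewrite tofrac_eq0 | exact: hu].
rewrite (@coord_span _ _ _ (in_tuple xs) a ha).
apply: big_ind => [|v1 v2 [u1 [n1 h1]] [u2 [n2 h2]]|i _].
- by exists 1; split; [exact: oner_neq0 | move=> t _; rewrite scaler0; apply: submod0].
- exists (u1 * u2); split; first by rewrite mulf_neq0.
  move=> t ht; rewrite scalerDr; apply: submodD => //.
    by rewrite tofracM -mulrA; apply: h1; apply: frac_submodZ.
  by rewrite tofracM [u1%:F * _]mulrC -mulrA; apply: h2; apply: frac_submodZ.
- have [u [nu hu]] := qle_tofrac (frac_submod_coefs _ AS) (H _ (mem_nth 0 (ltn_ord i))).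
  have [e [f [nf ->]]] := tofrac_quot (coord (in_tuple xs) i a).
  exists (u * f); split; first by rewrite mulf_neq0.
  move=> t ht; have := hu _ (frac_submodZ e CK ht); rewrite /coefs scalerA.
  have nfF : f%:F != 0 by rewrite tofrac_eq0.
  have -> : (u * f)%:F * t * (e%:F / f%:F) = u%:F * (e%:F * t) * (f%:F / f%:F).
    by rewrite tofracM; ring.
  by rewrite divff ?mulr1.
Qed.

Lemma expr_inj_nonunit (u : R) i j : u != 0 -> u \notin GRing.unit -> u ^+ i = u ^+ j -> i = j.
Proof.
move=> nu nun; wlog lij : i j / (i <= j)%N.
  by move=> W e; case: (leqP i j) => h; [apply: W | apply/esym/W => //; apply: ltnW].
move=> e; apply/eqP; rewrite eqn_leq lij /=; apply: contraNT nun; rewrite -ltnNge => ltij.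
have e1 : u ^+ i * u ^+ (j - i) = u ^+ i * 1 by rewrite -exprD subnKC // mulr1 e.
have ij0 : (0 < j - i)%N by rewrite subn_gt0.
by rewrite -(unitrX_pos u ij0) (mulfI (expf_neq0 i nu) e1) unitr1.
Qed.

Lemma bound_of_unique_bad (G : Type) (gs : seq G) (Bad : G -> nat -> Prop) :
  (forall g, List.In g gs -> forall i j, Bad g i -> Bad g j -> i = j) ->
  exists N, forall g, List.In g gs -> forall i, (N <= i)%N -> ~ Bad g i.
Proof.
elim: gs => [|g gs IH] H; first by exists 0%N.
have [N HN] := IH (fun g' h => H g' (or_intror h)).
case: (classic (exists i, Bad g i)) => [[b hb]|nb]; last first.
  by exists N => g' [<-|h] i hi; [move=> hi'; apply: nb; exists i | apply: HN].
exists (maxn N b.+1) => g' [<-|h] i hi.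
  move=> /(H g (or_introl erefl) _ _ hb) e; move: hi.
  by rewrite -e geq_max ltnn andbF.
by apply: HN => //; apply: leq_trans hi; rewrite leq_maxl.
Qed.

(* The powers of the non-unit u are distinct, so each map vanishes at most once along
   the points z' + u^i y; a late enough point avoids all the kernels. *)
Lemma common_nonzero_point n (V : lmodType K) (A : vset R n) (u : R) : submod A ->
  u != 0 -> u \notin GRing.unit -> forall fs : seq ('rV[K]_n -> V),
  (forall f, List.In f fs -> linear_on A f /\ exists a, A a /\ f a != 0) ->
  exists z, A z /\ forall f, List.In f fs -> f z != 0.
Proof.
move=> AS nu nun; elim=> [|f fs IH] H; first by exists 0; split => //; apply: submod0.
have [z' [Az' hz']] := IH (fun g h => H g (or_intror h)).
have [_ [y [Ay fy]]] := H f (or_introl erefl).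
pose v i := z' + (u ^+ i)%:F *: y.
have Av i : A (v i) by apply: submodD => //; apply: submodZ.
have HB g : List.In g (f :: fs) -> forall i j, g (v i) = 0 -> g (v j) = 0 -> i = j.
  move=> hg i j hi hj; have [[gD gZ] _] := H g hg.
  have gv k : g (v k) = g z' + (u ^+ k)%:F *: g y by rewrite gD ?gZ //; apply: submodZ.
  have ngy : g z' != 0 \/ g y != 0 by case: hg => [<-|/hz']; [right | left].
  apply: (expr_inj_nonunit nu nun); apply: NNPP => nij.
  have /eqP : (u ^+ i)%:F *: g y = (u ^+ j)%:F *: g y.
    by move: hi hj; rewrite !gv => /eqP; rewrite addrC addr_eq0 => /eqP -> /eqP;
      rewrite addrC addr_eq0 => /eqP ->.
  rewrite -subr_eq0 -scalerBl -tofracB scaler_eq0 tofrac_eq0 subr_eq0.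
  case/orP => [/eqP //|/eqP gy0].
  by move: hi; rewrite gv gy0 scaler0 addr0 => /eqP; case: ngy => /negP; rewrite ?gy0 ?eqxx.
have [N HN] := bound_of_unique_bad HB.
by exists (v N); split => // g hg; apply/eqP; apply: HN g hg N (leqnn N).
Qed.

Lemma scale_closed_of_units n (A : vset R n) : submod A ->
  (forall u : R, u != 0 -> u \in GRing.unit) -> forall a t, A a -> A (t *: a).
Proof.
move=> AS hu a t Aa; have [x [y [ny ->]]] := tofrac_quot t.
have -> : x%:F / y%:F = (x * y^-1)%:F by rewrite tofracM rmorphV ?hu.
exact: submodZ.
Qed.

Lemma exists_spanning_free n (A : vset R n) : exists xs : seq 'rV[K]_n,
  [/\ forall x, x \in xs -> A x, free xs & forall a, A a -> a \in <<xs>>%VS].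
Proof.
have sz (xs : seq 'rV[K]_n) : free xs -> (size xs <= n)%N.
  move=> /eqP <-; have := dimvS (subvf <<xs>>%VS); rewrite dimvf => /leq_trans; apply.
  by rewrite (dim_matrix _ 1 n) mul1r.
pose Pn j := (j <= n)%N /\ exists xs : seq 'rV[K]_n,
  [/\ forall x, x \in xs -> A x, free xs & size xs = (n - j)%N].
have Pnn : Pn n by split => //; exists [::]; rewrite subnn /free span_nil dimv0.
have [j [[ljn [xs [hA fr sx]]] minj]] := exists_minimal_nat (ex_intro Pn n Pnn).
exists xs; split => // a Aa; apply: NNPP => na.
have fr' : free (a :: xs) by rewrite free_cons fr andbT; apply/negP.
have := sz _ fr'; rewrite /= sx; case: j ljn sx minj => [|k] ljn sx minj h.
  by rewrite subn0 ltnn in h.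
apply: (minj k (ltnSn k)); split; first exact: ltnW.
exists (a :: xs); split => //=; last by rewrite sx subnSK.
by move=> x; rewrite inE => /orP [/eqP ->|/hA].
Qed.

End InnerTypeElement.

Section RankOneGenerated.
Variable R : idomainType.
Local Notation K := {fraction R}.
Local Notation "x %:F" := (@tofrac R x).
Variables (n : nat) (A : vset R n).
Hypotheses (AS : submod A)
  (hull_hom : forall x, A x -> x != 0 -> exists f a, [/\ hom A (hull A x) f, A a & f a != 0]).

(* An element on which the homomorphisms onto the pure hulls of a basis do not
   vanish has type below that of every element. *)
Lemma exists_inner_type_elem (g : 'rV[K]_n -> 'rV[K]_n) :
  linear_on A g -> (exists a, A a /\ g a != 0) -> exists z, inner_type_elem A z /\ g z != 0.
Proof.
move=> gL [a0 [Aa0 ga0]]; have [xs [xsA frx spx]] := exists_spanning_free A.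
have /ClassicalEpsilon.choice [F hF] : forall x, exists f, x \in xs ->
    hom A (hull A x) f /\ exists a, A a /\ f a != 0.
  move=> x; case: (boolP (x \in xs)) => hx; last by exists id.
  have [f [a [hf Aa fa]]] := hull_hom (xsA x hx) (free_not0 frx hx).
  by exists f => _; split => //; exists a.
have g_neq0 z : g z != 0 -> z != 0 by apply: contraNneq => ->; rewrite (linear_on0 AS gL).
pose fs := g :: map F xs.
have Hfs f : List.In f fs -> linear_on A f /\ exists a, A a /\ f a != 0.
  case=> [<-|inf]; first by split => //; exists a0.
  have [x [/InP hx ->]] := In_map_inv inf.
  by have [hf ex] := hF x hx; split => //; apply: hom_linear_on hf.
case: (classic (exists u : R, u != 0 /\ u \notin GRing.unit)) => [[u [nu nun]]|hf]; last first.
  have hu (u : R) : u != 0 -> u \in GRing.unit.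
    by move=> nu; apply: NNPP => h; apply: hf; exists u; split => //; apply/negP.
  exists a0; split => //; split => // [|a Aa _]; first exact: g_neq0.
  by apply: sub_qle => t _; apply: scale_closed_of_units.
have [z [Az hz]] := common_nonzero_point AS nu nun Hfs.
have gz := hz g (or_introl erefl).
exists z; split => //; split => // [|a Aa _]; first exact: g_neq0.
apply: (span_qle AS _ (spx a Aa)) => x hx; have [hf _] := hF x hx.
by apply: hom_hull_qle hf Az _; apply: hz; right; apply: In_map; apply/InP.
Qed.

Lemma quasi_summand_of_hom z y f : inner_type_elem A z -> hom A (hull A z) f -> A y ->
  f y != 0 -> quasi_summand A (hull A y).
Proof.
move=> [Az nz ITz] hf Ay fy; have fL := hom_linear_on hf; have [_ _ fH] := hf.
pose C x := A x /\ f x = 0.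
have CS : submod C.
  split; first by split; [apply: submod0 | apply: linear_on0 AS fL].
  split.
    by move=> x x' [Ax fx] [Ax' fx']; split; [apply: submodD | rewrite fL.1 // fx fx' addr0].
  by move=> s x [Ax fx]; split; [apply: submodZ | rewrite fL.2 // fx scaler0].
have [_ [g eg]] := fH _ Ay.
have ng : g != 0 by apply: contraNneq fy => g0; rewrite eg g0 scale0r.
have ny : y != 0 by apply: contraNneq fy => ->; rewrite (linear_on0 AS fL).
have [nn [nnn hnn]] := qle_tofrac (frac_submod_coefs y AS) (ITz y Ay ny).
have [g1 [g2 [ng2 eg12]]] := tofrac_quot g.
have ng1 : g1 != 0 by apply: contraNneq ng => g10; rewrite eg12 g10 tofrac0 mul0r.
have ng2F : g2%:F != 0 by rewrite tofrac_eq0.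
(* If f y = (g1 / g2) z and f c = t z, then nn t y is in A because z has inner type,
   and nn g1 c - g2 nn t y lies in the kernel of f. *)
have decomp c : A c -> sum_set (hull A y) C (smul (nn * g1) c).
  move=> Ac; have [Afc [t et]] := fH _ Ac.
  have Ayt : A ((g2%:F * (nn%:F * t)) *: y).
    by rewrite -scalerA; apply: (submodZ _ AS); apply: (hnn t); rewrite /coefs -et.
  exists ((g2%:F * (nn%:F * t)) *: y), (smul (nn * g1) c - (g2%:F * (nn%:F * t)) *: y).
  split; [by split => //; eexists | split | by rewrite addrC subrK].
    by apply: submodB => //; apply: submodZ.
  rewrite (linear_onB AS fL) //; last exact: submodZ.
  rewrite fL.2 // et (linear_onZ fL Ay Ayt) eg !scalerA eg12 tofracM.
  apply/eqP; rewrite subr_eq0; apply/eqP; congr (_ *: z).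
  have -> : g2%:F * (nn%:F * t) * (g1%:F / g2%:F) = nn%:F * g1%:F * t * (g2%:F / g2%:F) by ring.
  by rewrite divff ?mulr1.
exists (hull A y), C; split => //.
- by split; [apply: hull_submod | move=> x []].
- by split => // x [].
- move=> x [Ax [t ex]] [_]; subst x; rewrite (linear_onZ fL Ay Ax) => /eqP.
  by rewrite scaler_eq0 (negbTE fy) orbF => /eqP ->; rewrite scale0r.
- apply: (quasi_equal_sum_set AS _ _ (mulf_neq0 nnn ng1) decomp) => x []//.
- exact: quasi_iso_refl.
Qed.

Lemma rank1_generated_quasi_summand_IT : (exists a, A a /\ a != 0) ->
  exists m (B : vset R m), [/\ rank1 B, quasi_summand A B & type_is_IT A B].
Proof.
move=> [a0 [Aa0 na0]]; have [f0 [a [hf0 Aa fa]]] := hull_hom Aa0 na0.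
have [z [ITz f0z]] := exists_inner_type_elem (hom_linear_on hf0) (ex_intro _ a (conj Aa fa)).
have nz : z != 0 by apply: contraNneq f0z => ->; rewrite (linear_on0 AS (hom_linear_on hf0)).
have [Az _ _] := ITz; have [f [a' [hf Aa' fa']]] := hull_hom Az nz.
have [y [ITy fy]] := exists_inner_type_elem (hom_linear_on hf) (ex_intro _ a' (conj Aa' fa')).
have [Ay _ _] := ITy; have IT := type_is_IT_hull AS ITy.
by exists n, (hull A y); split => //; [case: IT | apply: quasi_summand_of_hom ITz hf Ay fy].
Qed.

End RankOneGenerated.

Lemma hull_hom_of_rank1_generated R n (A : vset R n) : submod A ->
  (forall P, pure_in P A -> rank1 P -> generated_by A P) ->
  forall x, A x -> x != 0 -> exists f a, [/\ hom A (hull A x) f, A a & f a != 0].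
Proof.
move=> AS hb x Ax nx; have lx := hull_line Ax nx.
have G := hb _ (hull_pure x AS) (rank1_line (hull_submod x AS) lx).
exact: generated_by_hom_neq0 G lx.1 nx.
Qed.

Unset Implicit Arguments.

Theorem theorem2p4 (R : idomainType) (hR : dedekind R)
    (n : nat) (A : vset R n) (hA : submod A) (hA0 : exists a, A a /\ a != 0) :
  [<-> self_pure_generator A;
       forall P : vset R n, pure_in P A -> rank1 P -> generated_by A P;
       exists (m : nat) (B : vset R m), [/\ rank1 B, quasi_summand A B & type_is_IT A B];
       exists B : vset R n, [/\ rank1 B, direct_summand A B & type_is_IT A B]].
Proof.
tfae=> [ha P Pp _|hb|[m [B [B1 qsB IT]]]|[B [B1 dsB IT]]].
- exact: ha P Pp.
- exact: (rank1_generated_quasi_summand_IT hA (hull_hom_of_rank1_generated hA hb) hA0).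
- exact: (quasi_summand_IT_direct hR hA B1 qsB IT).
- exact: (quasi_summand_IT_self_pure_generator hR hA B1 (direct_summand_quasi_summand hA dsB) IT).
Qed.
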